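(* Let $f,g_1,\ldots,g_m\in\mathbb R[\mathbf x]$, $\mathbf x=(x_1,\ldots,x_n)$, satisfy the Sparsity Assumption and the Compactness/Generation Assumption (a) below, and let $\mathbf K=\{\mathbf x\in\mathbb R^n: 0\le g_j(\mathbf x)\le 1,\ j=1,\ldots,m\}$. If $f(\mathbf x)>0$ for all $\mathbf x\in\mathbf K$, then there exist polynomials $f^\ell\in\mathbb R[\mathbf x;I_\ell]$, $\ell=1,\ldots,p$, with $f=\sum_{\ell=1}^p f^\ell$, and for each $\ell$ finitely many positive reals $c^\ell_{\alpha\beta}$, $(\alpha,\beta)\in N^\ell$, such that \[ f^\ell=\sum_{(\alpha,\beta)\in N^\ell} c^\ell_{\alpha\beta}\,h_{\alpha\beta},\qquad \ell=1,\ldots,p. \]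
   Context: For $I\subseteq\{1,\ldots,n\}$, $\mathbb R[\mathbf x;I]$ denotes the subring of $\mathbb R[\mathbf x]$ of polynomials in the variables $\{x_i:i\in I\}$ only. For $\alpha,\beta\in\mathbb N_0^m$, $h_{\alpha\beta}:=\prod_{j=1}^m g_j^{\alpha_j}(1-g_j)^{\beta_j}$. For $\alpha\in\mathbb N_0^m$, $\mathrm{supp}(\alpha)=\{j:\alpha_j\neq 0\}$. Sparsity Assumption: there are $p\in\mathbb N$ and sets $I_\ell\subseteq\{1,\ldots,n\}$, $J_\ell\subseteq\{1,\ldots,m\}$ ($\ell=1,\ldots,p$) such that: $f=\sum_{\ell=1}^p f^\ell$ for some $f^\ell\in\mathbb R[\mathbf x;I_\ell]$; $g_j\in\mathbb R[\mathbf x;I_\ell]$ for all $j\in J_\ell$; $\bigcup_\ell I_\ell=\{1,\ldots,n\}$; $\bigcup_\ell J_\ell=\{1,\ldots,m\}$; and (running intersection property) for every $\ell=1,\ldots,p-1$ there is $s\le \ell$ with $I_{\ell+1}\cap\bigcup_{r=1}^{\ell}I_r\subseteq I_s$. With $n_\ell=|I_\ell|$, let $\mathbf K_\ell=\{\mathbf z\in\mathbb R^{n_\ell}:0\le g_j(\mathbf z)\le 1,\ j\in J_\ell\}$ (each $g_j$, $j\in J_\ell$, viewed as a function of the variables indexed by $I_\ell$). Compactness/Generation Assumption (a): for each $\ell$, $\mathbf K_\ell$ is compact and the polynomials $1$ and $(g_j)_{j\in J_\ell}$ generate $\mathbb R[\mathbf x;I_\ell]$ as an $\mathbb R$-algebra.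 $N^\ell:=\{(\alpha,\beta)\in\mathbb N_0^m\times\mathbb N_0^m:\mathrm{supp}(\alpha)\cup\mathrm{supp}(\beta)\subseteq J_\ell\}$. *)

(* classical reals. Multivariate polynomials are represented as
   polynomial functions R^n -> R (points are nat -> R, variables x_0..x_{n-1}). *)
From Stdlib Require Import Reals List.
Open Scope R_scope.

Definition point := nat -> R.
Definition fn := point -> R.

Inductive poly_in (I : nat -> Prop) : fn -> Prop :=
  | pi_const (c : R) : poly_in I (fun _ => c)
  | pi_var (i : nat) : I i -> poly_in I (fun x => x i)
  | pi_add (P Q : fn) : poly_in I P -> poly_in I Q -> poly_in I (fun x => P x + Q x)
  | pi_mul (P Q : fn) : poly_in I P -> poly_in I Q -> poly_in I (fun x => P x * Q x).

Inductive alg_gen (S : fn -> Prop) : fn -> Prop :=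
  | ag_const (c : R) : alg_gen S (fun _ => c)
  | ag_gen (P : fn) : S P -> alg_gen S P
  | ag_add (P Q : fn) : alg_gen S P -> alg_gen S Q -> alg_gen S (fun x => P x + Q x)
  | ag_mul (P Q : fn) : alg_gen S P -> alg_gen S Q -> alg_gen S (fun x => P x * Q x).

Fixpoint hprod (g : nat -> fn) (alpha beta : nat -> nat) (m : nat) (x : point) : R :=
  match m with
  | O => 1
  | S k => hprod g alpha beta k x * (g k x ^ alpha k * (1 - g k x) ^ beta k)
  end.
Definition h (m : nat) (g : nat -> fn) (alpha beta : nat -> nat) : fn :=
  fun x => hprod g alpha beta m x.

(* Compactness of a subset of R^{n_l}, the coordinates being indexed by I
   (S must only depend on the coordinates in I): bounded and closed (Heine-Borel). *)
Definition compact_in (I : nat -> Prop) (S : point -> Prop) : Prop :=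
  (exists M : R, forall x, S x -> forall i, I i -> Rabs (x i) <= M) /\
  (forall (u : nat -> point) (x : point),
     (forall k, S (u k)) ->
     (forall i, I i -> Un_cv (fun k => u k i) (x i)) -> S x).

Definition lin_comb (m : nat) (g : nat -> fn)
  (l : list ((nat -> nat) * (nat -> nat) * R)) : fn :=
  fun x => fold_right (fun t acc => let '(a, b, c) := t in c * h m g a b x + acc) 0 l.

Fixpoint sum_upto (F : nat -> R) (p : nat) : R :=
  match p with O => 0 | S k => sum_upto F k + F k end.

(* First the summands [F_l] are made positive on their own blocks [K_l], one block at a time:
   the positivity of [A + F_(l+1)], where [A] is the sum over the earlier blocks, on the glued
   compact set yields, by compactness and a Bernstein partition of unity in the shared variables,
   a polynomial [h] in these variables with [A - h > 0] and [F_(l+1) + h > 0]; by the running intersection property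
   the shared variables all lie in one earlier block [I_s], so [h] can be moved there.
   On a single block the [g_j] generate the coordinate ring, so [x_i = sigma_i (g x)] for
   polynomials [sigma_i] and [F_l x = A (g x)] with [A := F_l o sigma]. Adding a large multiple of
   the penalty [sum_j (y_j - g_j (sigma y))^2], which vanishes at [y = g x], makes [A] positive on
   the whole unit cube [[0,1]^(J_l)]; there Bernstein's theorem writes it with positive
   coefficients in the products [y^alpha (1 - y)^beta], and substituting [y = g x] gives the
   [h_(alpha beta)]. *)

From Stdlib Require Import Reals List Lra Lia Psatz Classical ClassicalEpsilon FunctionalExtensionality FinFun Rtopology Arith.
Open Scope R_scope.

(** * Polynomial functions and finite sums *)

Lemma poly_in_ext (I : nat -> Prop) (P Q : fn) : poly_in I P -> (forall x, P x = Q x) -> poly_in I Q.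
Proof. intros H E. replace Q with P; [exact H|]. apply functional_extensionality; exact E. Qed.

Lemma poly_in_mono (I I' : nat -> Prop) (P : fn) : (forall i, I i -> I' i) -> poly_in I P -> poly_in I' P.
Proof. intros HI H; induction H; constructor; auto. Qed.

Lemma poly_in_congr (I : nat -> Prop) (P : fn) : poly_in I P ->
  forall x x', (forall i, I i -> x i = x' i) -> P x = P x'.
Proof.
  intros H; induction H; intros x x' E; simpl; auto.
  all: rewrite (IHpoly_in1 x x' E), (IHpoly_in2 x x' E); reflexivity.
Qed.

Lemma poly_in_scal (I : nat -> Prop) (P : fn) c : poly_in I P -> poly_in I (fun x => c * P x).
Proof. intros H. apply (pi_mul I (fun _ => c) P); [constructor|auto]. Qed.

Lemma poly_in_sub (I : nat -> Prop) (P Q : fn) :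
  poly_in I P -> poly_in I Q -> poly_in I (fun x => P x - Q x).
Proof.
  intros HP HQ. apply poly_in_ext with (fun x => P x + (-1) * Q x).
  - apply pi_add; auto. apply poly_in_scal; auto.
  - intros; ring.
Qed.

Lemma poly_in_pow (I : nat -> Prop) (P : fn) k : poly_in I P -> poly_in I (fun x => P x ^ k).
Proof.
  intros H; induction k; simpl.
  - apply pi_const.
  - apply (pi_mul I P (fun x => P x ^ k)); auto.
Qed.

Lemma poly_in_bounded_on_box (I : nat -> Prop) (P : fn) : poly_in I P -> forall Rb,
  exists M, forall x, (forall i, I i -> Rabs (x i) <= Rb) -> Rabs (P x) <= M.
Proof.
  intros H Rb; induction H.
  - exists (Rabs c); intros; lra.
  - exists Rb; intros x Hx; auto.
  - destruct IHpoly_in1 as [M1 H1], IHpoly_in2 as [M2 H2]. exists (M1 + M2); intros x Hx.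
    specialize (H1 x Hx); specialize (H2 x Hx). pose proof (Rabs_triang (P x) (Q x)); lra.
  - destruct IHpoly_in1 as [M1 H1], IHpoly_in2 as [M2 H2]. exists (M1 * M2); intros x Hx.
    specialize (H1 x Hx); specialize (H2 x Hx). rewrite Rabs_mult.
    apply Rmult_le_compat; auto; apply Rabs_pos.
Qed.

Lemma poly_in_bounded_on (I : nat -> Prop) (K : point -> Prop) (P : fn) Rb : poly_in I P ->
  (forall x, K x -> forall i, I i -> Rabs (x i) <= Rb) -> exists M, 0 <= M /\ forall x, K x -> Rabs (P x) <= M.
Proof.
  intros HP HK. destruct (poly_in_bounded_on_box I P HP Rb) as [M HM].
  exists (Rmax M 0). split; [apply Rmax_r|]. intros x Hx.
  specialize (HM x (HK x Hx)). pose proof (Rmax_l M 0); lra.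
Qed.

Lemma Un_cv_const c : Un_cv (fun _ => c) c.
Proof. intros e He; exists 0%nat; intros; unfold R_dist; rewrite Rminus_diag, Rabs_R0; lra. Qed.

Lemma poly_in_continuous (I : nat -> Prop) (P : fn) : poly_in I P -> forall (u : nat -> point) x,
  (forall i, I i -> Un_cv (fun k => u k i) (x i)) -> Un_cv (fun k => P (u k)) (P x).
Proof.
  intros H u x Hu; induction H.
  - apply Un_cv_const.
  - auto.
  - apply (CV_plus (fun k => P (u k)) (fun k => Q (u k))); auto.
  - apply (CV_mult (fun k => P (u k)) (fun k => Q (u k))); auto.
Qed.

Lemma poly_in_subst (I J : nat -> Prop) (P : fn) (s : nat -> fn) : poly_in I P ->
  (forall i, I i -> poly_in J (s i)) -> poly_in J (fun y => P (fun i => s i y)).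
Proof.
  intros H Hs; induction H.
  - apply pi_const.
  - auto.
  - apply (pi_add J (fun y => P (fun i => s i y)) (fun y => Q (fun i => s i y))); auto.
  - apply (pi_mul J (fun y => P (fun i => s i y)) (fun y => Q (fun i => s i y))); auto.
Qed.

Lemma alg_gen_poly_of_generators (g : nat -> fn) (J : nat -> Prop) (P : fn) :
  alg_gen (fun q => exists j, J j /\ q = g j) P ->
  exists Pt, poly_in J Pt /\ forall x, P x = Pt (fun j => g j x).
Proof.
  intros H; induction H.
  - exists (fun _ => c); split; [constructor|auto].
  - destruct H as [j [Hj ->]]. exists (fun y => y j); split; [constructor; auto|auto].
  - destruct IHalg_gen1 as [P1 [H1 E1]], IHalg_gen2 as [P2 [H2 E2]].
    exists (fun y => P1 y + P2 y); split; [constructor; auto|]. intros; rewrite E1, E2; auto.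
  - destruct IHalg_gen1 as [P1 [H1 E1]], IHalg_gen2 as [P2 [H2 E2]].
    exists (fun y => P1 y * P2 y); split; [constructor; auto|]. intros; rewrite E1, E2; auto.
Qed.

Definition lsum {A} (l : list A) (f : A -> R) : R := fold_right (fun a acc => f a + acc) 0 l.

Fixpoint prodn (f : nat -> R) (n : nat) : R :=
  match n with O => 1 | S k => prodn f k * f k end.

Lemma lsum_app {A} (l1 l2 : list A) f : lsum (l1 ++ l2) f = lsum l1 f + lsum l2 f.
Proof. induction l1; simpl; [ring|rewrite IHl1; ring]. Qed.

Lemma lsum_ext {A} (l : list A) f f' : (forall a, In a l -> f a = f' a) -> lsum l f = lsum l f'.
Proof. induction l; simpl; intros H; auto. rewrite H, IHl; auto. Qed.

Lemma lsum_plus {A} (l : list A) f f' : lsum l (fun a => f a + f' a) = lsum l f + lsum l f'.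
Proof. induction l; simpl; [ring|rewrite IHl; ring]. Qed.

Lemma lsum_scal {A} (l : list A) f c : lsum l (fun a => c * f a) = c * lsum l f.
Proof. induction l; simpl; [ring|rewrite IHl; ring]. Qed.

Lemma lsum_minus {A} (l : list A) f f' : lsum l f - lsum l f' = lsum l (fun a => f a - f' a).
Proof. induction l; simpl; [ring|rewrite <- IHl; ring]. Qed.

Lemma lsum_le {A} (l : list A) f f' : (forall a, In a l -> f a <= f' a) -> lsum l f <= lsum l f'.
Proof.
  induction l; simpl; intros H; [lra|].
  pose proof (H a (or_introl eq_refl)). pose proof (IHl (fun b Hb => H b (or_intror Hb))). lra.
Qed.

Lemma lsum_map {A B} (l : list A) (g : A -> B) f : lsum (map g l) f = lsum l (fun a => f (g a)).
Proof. induction l; simpl; auto. rewrite IHl; auto. Qed.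

Lemma lsum_flat_map {A B} (l : list A) (g : A -> list B) f :
  lsum (flat_map g l) f = lsum l (fun a => lsum (g a) f).
Proof. induction l; simpl; auto. rewrite lsum_app, IHl; auto. Qed.

Lemma lsum_swap {A B} (l1 : list A) (l2 : list B) F :
  lsum l1 (fun a => lsum l2 (fun b => F a b)) = lsum l2 (fun b => lsum l1 (fun a => F a b)).
Proof.
  induction l1; simpl.
  - induction l2; simpl; auto. rewrite <- IHl2; ring.
  - rewrite IHl1, <- lsum_plus; auto.
Qed.

Lemma lsum_zero {A} (l : list A) : lsum l (fun _ => 0) = 0.
Proof. induction l; simpl; auto; rewrite IHl; ring. Qed.

Lemma lsum_nonneg {A} (l : list A) f : (forall a, In a l -> 0 <= f a) -> 0 <= lsum l f.
Proof. intros H. rewrite <- (lsum_zero l). apply lsum_le; auto. Qed.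

Lemma lsum_abs {A} (l : list A) f : Rabs (lsum l f) <= lsum l (fun a => Rabs (f a)).
Proof.
  induction l; simpl.
  - rewrite Rabs_R0; lra.
  - pose proof (Rabs_triang (f a) (lsum l f)); lra.
Qed.

Lemma prodn_ext f f' n : (forall k, (k < n)%nat -> f k = f' k) -> prodn f n = prodn f' n.
Proof. induction n; simpl; intros H; auto. rewrite IHn, H; auto. Qed.

Lemma prodn_mult f f' n : prodn (fun k => f k * f' k) n = prodn f n * prodn f' n.
Proof. induction n; simpl; [ring|rewrite IHn; ring]. Qed.

Lemma prodn_nonneg f n : (forall k, (k < n)%nat -> 0 <= f k) -> 0 <= prodn f n.
Proof. induction n; simpl; intros H; [lra|]. apply Rmult_le_pos; auto. Qed.

Lemma prodn_pos f n : (forall k, (k < n)%nat -> 0 < f k) -> 0 < prodn f n.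
Proof. induction n; simpl; intros H; [lra|]. apply Rmult_lt_0_compat; auto. Qed.

Lemma prodn_le1 f n : (forall k, (k < n)%nat -> 0 <= f k <= 1) -> 0 <= prodn f n <= 1.
Proof.
  induction n; simpl; intros H; [lra|].
  destruct IHn as [A B]; auto. destruct (H n) as [C D]; auto. split; nra.
Qed.

Lemma prodn_one f n : (forall k, (k < n)%nat -> f k = 1) -> prodn f n = 1.
Proof. induction n; simpl; intros H; auto. rewrite IHn, H; auto; ring. Qed.

Lemma prodn_zero f n k : (k < n)%nat -> f k = 0 -> prodn f n = 0.
Proof.
  induction n; intros Hk E; simpl; [lia|]. destruct (Nat.eq_dec k n).
  - subst; rewrite E; ring.
  - rewrite IHn by (auto; lia); ring.
Qed.

Lemma prodn_single f n k c : (k < n)%nat ->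
  prodn (fun k' => if Nat.eq_dec k' k then c * f k' else f k') n = c * prodn f n.
Proof.
  induction n; intros Hk; [lia|]. simpl. destruct (Nat.eq_dec n k).
  - subst k. rewrite (prodn_ext _ f); [ring|]. intros k' Hk'. destruct (Nat.eq_dec k' n); [lia|auto].
  - rewrite IHn; [ring|lia].
Qed.

Lemma prodn_div f g n : (forall k, (k < n)%nat -> g k <> 0) ->
  prodn (fun k => f k / g k) n = prodn f n / prodn g n.
Proof.
  induction n; simpl; intros H; [field|]. rewrite IHn by auto.
  assert (prodn g n <> 0).
  { clear IHn. induction n; simpl; [lra|]. apply Rmult_integral_contrapositive; split; auto. }
  field; split; auto.
Qed.

Lemma pow_prodn x a : x ^ a = prodn (fun _ => x) a.
Proof. induction a; simpl; auto. rewrite IHa; ring. Qed.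

Lemma prodn_diff a b n : (forall k, (k < n)%nat -> 0 <= a k <= 1 /\ 0 <= b k <= 1) ->
  Rabs (prodn a n - prodn b n) <= sum_upto (fun k => Rabs (a k - b k)) n.
Proof.
  induction n; simpl; intros H; [rewrite Rminus_diag, Rabs_R0; lra|].
  assert (IH := IHn (fun k Hk => H k ltac:(lia))).
  destruct (H n) as [[Ha1 Ha2] [Hb1 Hb2]]; [lia|].
  assert (Pa := prodn_le1 a n (fun k Hk => proj1 (H k ltac:(lia)))).
  assert (Pb := prodn_le1 b n (fun k Hk => proj2 (H k ltac:(lia)))).
  replace (prodn a n * a n - prodn b n * b n)
    with ((prodn a n - prodn b n) * a n + prodn b n * (a n - b n)) by ring.
  eapply Rle_trans; [apply Rabs_triang|]. rewrite !Rabs_mult.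
  rewrite (Rabs_right (a n)), (Rabs_right (prodn b n)) by lra.
  pose proof (Rabs_pos (prodn a n - prodn b n)). pose proof (Rabs_pos (a n - b n)). nra.
Qed.

Lemma sum_upto_S F n : sum_upto F (S n) = sum_upto F n + F n.
Proof. reflexivity. Qed.

Lemma sum_upto_ext F F' n : (forall k, (k < n)%nat -> F k = F' k) -> sum_upto F n = sum_upto F' n.
Proof. induction n; simpl; intros H; auto. rewrite IHn, H; auto. Qed.

Lemma sum_upto_le F F' n : (forall k, (k < n)%nat -> F k <= F' k) -> sum_upto F n <= sum_upto F' n.
Proof.
  induction n; simpl; intros H; [lra|].
  pose proof (H n ltac:(lia)). pose proof (IHn (fun k Hk => H k ltac:(lia))). lra.
Qed.

Lemma sum_upto_nonneg F n : (forall k, (k < n)%nat -> 0 <= F k) -> 0 <= sum_upto F n.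
Proof.
  induction n; simpl; intros H; [lra|].
  pose proof (H n ltac:(lia)). pose proof (IHn (fun k Hk => H k ltac:(lia))). lra.
Qed.

Lemma sum_upto_term F n k : (k < n)%nat -> (forall k, (k < n)%nat -> 0 <= F k) -> F k <= sum_upto F n.
Proof.
  induction n; simpl; intros Hk H; [lia|]. destruct (Nat.eq_dec k n).
  - subst. pose proof (sum_upto_nonneg F n (fun k Hk => H k ltac:(lia))); lra.
  - pose proof (H n ltac:(lia)). pose proof (IHn ltac:(lia) (fun k Hk => H k ltac:(lia))). lra.
Qed.

Lemma sum_upto_nonneg_eq0 F n : (forall k, (k < n)%nat -> 0 <= F k) -> sum_upto F n <= 0 ->
  forall k, (k < n)%nat -> F k = 0.
Proof. intros H1 H2 k Hk. pose proof (sum_upto_term F n k Hk H1). pose proof (H1 k Hk). lra. Qed.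

Lemma sum_upto_const c n : sum_upto (fun _ => c) n = INR n * c.
Proof. induction n; simpl sum_upto; [simpl; ring|]. rewrite IHn, S_INR; ring. Qed.

Lemma sum_upto_plus F F' n : sum_upto (fun k => F k + F' k) n = sum_upto F n + sum_upto F' n.
Proof. induction n; simpl; [ring|rewrite IHn; ring]. Qed.

Lemma sum_upto_scal F c n : sum_upto (fun k => c * F k) n = c * sum_upto F n.
Proof. induction n; simpl; [ring|rewrite IHn; ring]. Qed.

Lemma sum_upto_sub_at F d s n : (s < n)%nat ->
  sum_upto (fun r => if Nat.eq_dec r s then F r - d else F r) n = sum_upto F n - d.
Proof.
  induction n; intros H; simpl; [lia|]. destruct (Nat.eq_dec n s).
  - subst s. rewrite (sum_upto_ext _ F); [ring|]. intros k Hk; destruct (Nat.eq_dec k n); [lia|auto].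
  - rewrite IHn by lia. ring.
Qed.

Lemma lsum_sum_upto {A} (l : list A) (F : A -> nat -> R) n :
  lsum l (fun a => sum_upto (F a) n) = sum_upto (fun k => lsum l (fun a => F a k)) n.
Proof. induction n; simpl; [apply lsum_zero|]. rewrite lsum_plus, IHn; auto. Qed.

Lemma poly_in_prodn (I : nat -> Prop) (F : nat -> fn) n :
  (forall k, (k < n)%nat -> poly_in I (F k)) -> poly_in I (fun x => prodn (fun k => F k x) n).
Proof.
  induction n; intros H; simpl; [apply pi_const|].
  apply (pi_mul I (fun x => prodn (fun k => F k x) n) (F n)); auto.
Qed.

Lemma poly_in_lsum {A} (I : nat -> Prop) (l : list A) (F : A -> fn) :
  (forall a, In a l -> poly_in I (F a)) -> poly_in I (fun x => lsum l (fun a => F a x)).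
Proof.
  induction l; intros H; simpl; [apply pi_const|].
  apply (pi_add I (F a) (fun x => lsum l (fun a => F a x))); auto with datatypes.
Qed.

Lemma poly_in_sum_upto (I : nat -> Prop) (F : nat -> fn) n :
  (forall k, (k < n)%nat -> poly_in I (F k)) -> poly_in I (fun x => sum_upto (fun k => F k x) n).
Proof.
  induction n; intros H; simpl; [apply pi_const|].
  apply (pi_add I (fun x => sum_upto (fun k => F k x) n) (F n)); auto.
Qed.

Lemma Rabs_le_inv a b : Rabs a <= b -> - b <= a <= b.
Proof. intros H. pose proof (Rle_abs a). pose proof (Rle_abs (- a)). rewrite Rabs_Ropp in H1. lra. Qed.

Lemma Rdiv_le_1 a b : a <= b -> 0 < b -> a / b <= 1.
Proof. intros. apply Rmult_le_reg_r with b; auto. unfold Rdiv; rewrite Rmult_assoc, Rinv_l; lra. Qed.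

Lemma Rdiv_nonneg a b : 0 <= a -> 0 < b -> 0 <= a / b.
Proof. intros. unfold Rdiv; apply Rmult_le_pos; [lra|apply Rlt_le, Rinv_0_lt_compat; auto]. Qed.

Lemma pow_le_1 x a : 0 <= x <= 1 -> x ^ a <= 1.
Proof. intros H; induction a; simpl; [lra|]. assert (0 <= x ^ a) by (apply pow_le; lra). nra. Qed.

Lemma INR_unbounded_above (X : R) (N0 : nat) : exists N, (N0 <= N)%nat /\ INR N > X.
Proof.
  destruct (INR_unbounded X) as [N1 H1]. exists (Nat.max N0 N1). split; [lia|].
  assert (INR N1 <= INR (Nat.max N0 N1)) by (apply le_INR; lia). lra.
Qed.

(** * Bernstein polynomials *)

Definition set_at (q : nat -> nat) (k b : nat) : nat -> nat :=
  fun i => if Nat.eq_dec i k then b else q i.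

Fixpoint grid (Nv : nat -> nat) (n : nat) : list (nat -> nat) :=
  match n with
  | O => (fun _ => 0%nat) :: nil
  | S k => flat_map (fun q => map (fun b => set_at q k b) (seq 0 (S (Nv k)))) (grid Nv k)
  end.

Lemma in_grid Nv n q : In q (grid Nv n) ->
  (forall k, (k < n)%nat -> (q k <= Nv k)%nat) /\ (forall k, (n <= k)%nat -> q k = 0%nat).
Proof.
  revert q; induction n; intros q Hq; cbn [grid] in Hq.
  - destruct Hq as [<-|[]]. split; intros; [lia|auto].
  - apply in_flat_map in Hq. destruct Hq as [q0 [Hq0 Hb]]. apply in_map_iff in Hb.
    destruct Hb as [b [<- Hb]]. apply in_seq in Hb. destruct (IHn q0 Hq0) as [A B].
    unfold set_at; split; intros k Hk; destruct (Nat.eq_dec k n); try (subst k; lia); auto.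
    + apply A; lia.
    + apply B; lia.
Qed.

Lemma in_grid_le Nv n q k : In q (grid Nv n) -> (q k <= Nv k)%nat.
Proof.
  intros Hq. destruct (in_grid Nv n q Hq) as [G1 G2].
  destruct (Nat.lt_ge_cases k n); [auto|rewrite G2; auto; lia].
Qed.

Lemma grid_sum_prodn Nv n (f : nat -> nat -> R) :
  lsum (grid Nv n) (fun q => prodn (fun k => f k (q k)) n)
  = prodn (fun k => lsum (seq 0 (S (Nv k))) (f k)) n.
Proof.
  induction n; cbn [grid prodn]; [simpl; ring|].
  rewrite lsum_flat_map, <- IHn, Rmult_comm, <- lsum_scal. apply lsum_ext; intros q Hq.
  rewrite lsum_map, Rmult_comm, <- lsum_scal. apply lsum_ext; intros b Hb.
  unfold set_at. destruct (Nat.eq_dec n n); [|lia].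
  rewrite (prodn_ext _ (fun k => f k (q k))); [ring|].
  intros k Hk. destruct (Nat.eq_dec k n); [lia|auto].
Qed.

Lemma grid_NoDup Nv n : NoDup (grid Nv n).
Proof.
  induction n; cbn [grid]; [constructor; [simpl; tauto|constructor]|].
  assert (H : forall l, (forall q, In q l -> In q (grid Nv n)) -> NoDup l ->
    NoDup (flat_map (fun q => map (fun b => set_at q n b) (seq 0 (S (Nv n)))) l)).
  { induction l; intros Hl Hd; cbn [flat_map]; [constructor|]. inversion Hd; subst.
    apply NoDup_app.
    - apply Injective_map_NoDup; [|apply seq_NoDup]. intros b1 b2 E.
      assert (E2 := f_equal (fun q => q n) E). unfold set_at in E2; simpl in E2.
      destruct (Nat.eq_dec n n); [auto|lia].
    - apply IHl; auto with datatypes.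
    - intros x Hx Hx2. apply in_map_iff in Hx. destruct Hx as [b [<- _]].
      apply in_flat_map in Hx2. destruct Hx2 as [q' [Hq' Hb']]. apply in_map_iff in Hb'.
      destruct Hb' as [b' [E _]]. apply H1.
      assert (Ha := in_grid Nv n a (Hl a (or_introl eq_refl))).
      assert (Hq'g := in_grid Nv n q' (Hl q' (or_intror Hq'))).
      replace a with q'; [auto|]. apply functional_extensionality; intros k.
      assert (Ek := f_equal (fun q => q k) E). unfold set_at in Ek; simpl in Ek.
      destruct (Nat.eq_dec k n); [subst k; rewrite (proj2 Ha), (proj2 Hq'g); auto|auto]. }
  apply H; auto.
Qed.

Definition bernstein (N b : nat) (t : R) : R := C N b * t ^ b * (1 - t) ^ (N - b).

Definition falling (b a : nat) : R := prodn (fun i => INR b - INR i) a.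

(* [(b)_a / (N)_a]: the coefficient of [bernstein N b] in the Bernstein expansion of [t ^ a]. *)
Definition falling_ratio (N a b : nat) : R := prodn (fun i => (INR b - INR i) / (INR N - INR i)) a.

Lemma falling_fact b a : (a <= b)%nat -> falling b a = INR (fact b) / INR (fact (b - a)).
Proof.
  induction a; intros H; unfold falling in *; simpl prodn.
  - rewrite Nat.sub_0_r. field. apply not_0_INR, fact_neq_0.
  - rewrite IHa by lia. replace (b - a)%nat with (S (b - S a)) by lia. rewrite fact_simpl, mult_INR.
    replace (INR (S (b - S a))) with (INR b - INR a) by (rewrite <- minus_INR by lia; f_equal; lia).
    assert (0 < INR (fact (b - S a))) by apply INR_fact_lt_0.
    assert (INR a < INR b) by (apply lt_INR; lia). field; lra.
Qed.

Lemma falling_ratio_falling N a b : (a <= N)%nat -> falling_ratio N a b = falling b a / falling N a.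
Proof.
  intros H. apply prodn_div. intros k Hk.
  assert (INR k < INR N) by (apply lt_INR; lia). lra.
Qed.

Lemma falling_ratio_lt N a b : (b < a)%nat -> falling_ratio N a b = 0.
Proof. intros H. apply (prodn_zero _ _ b); auto. rewrite Rminus_diag; unfold Rdiv; ring. Qed.

Lemma falling_ratio_binomial N a b : (a <= b)%nat -> (b <= N)%nat ->
  falling_ratio N a b * C N b = C (N - a) (b - a).
Proof.
  intros H1 H2. rewrite falling_ratio_falling, !falling_fact by lia. unfold C.
  replace (N - a - (b - a))%nat with (N - b)%nat by lia.
  pose proof (INR_fact_lt_0 b). pose proof (INR_fact_lt_0 N). pose proof (INR_fact_lt_0 (N - a)).
  pose proof (INR_fact_lt_0 (b - a)). pose proof (INR_fact_lt_0 (N - b)). field; lra.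
Qed.

Lemma sum_f_R0_lsum f n : sum_f_R0 f n = lsum (seq 0 (S n)) f.
Proof.
  induction n; [simpl; ring|]. simpl sum_f_R0.
  rewrite IHn, (seq_S (S n) 0), lsum_app. simpl. ring.
Qed.

Lemma seq_shift_add a len : seq a len = map (Nat.add a) (seq 0 len).
Proof.
  revert a; induction len; intros a; simpl; auto. f_equal; [lia|].
  rewrite IHlen, (IHlen 1%nat), map_map. apply map_ext; intros; lia.
Qed.

(* [t ^ a = t ^ a * (t + (1 - t)) ^ (N - a)], expanded by the binomial theorem. *)
Lemma pow_bernstein_expansion N a t : (a <= N)%nat ->
  t ^ a = lsum (seq 0 (S N)) (fun b => falling_ratio N a b * bernstein N b t).
Proof.
  intros H. replace (S N) with (a + S (N - a))%nat by lia. rewrite seq_app, lsum_app.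
  rewrite (lsum_ext _ _ (fun _ => 0)).
  2:{ intros b Hb; apply in_seq in Hb. rewrite falling_ratio_lt by lia; ring. }
  rewrite lsum_zero, Rplus_0_l. simpl Nat.add. rewrite seq_shift_add, lsum_map.
  transitivity (t ^ a * (t + (1 - t)) ^ (N - a)).
  { replace (t + (1 - t)) with 1 by ring. rewrite pow1; ring. }
  rewrite binomial, sum_f_R0_lsum, <- lsum_scal. apply lsum_ext; intros i Hi. apply in_seq in Hi.
  unfold bernstein.
  replace (falling_ratio N a (a + i) * (C N (a + i) * t ^ (a + i) * (1 - t) ^ (N - (a + i))))
    with ((falling_ratio N a (a + i) * C N (a + i)) * t ^ (a + i) * (1 - t) ^ (N - (a + i))) by ring.
  rewrite falling_ratio_binomial by lia. replace (a + i - a)%nat with i by lia.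
  replace (N - (a + i))%nat with (N - a - i)%nat by lia. rewrite pow_add; ring.
Qed.

Lemma bernstein_sum_1 N t : lsum (seq 0 (S N)) (fun b => bernstein N b t) = 1.
Proof.
  transitivity (t ^ 0); [|reflexivity]. rewrite (pow_bernstein_expansion N 0 t) by lia.
  apply lsum_ext; intros. unfold falling_ratio; simpl; ring.
Qed.

Lemma bernstein_second_moment N t : (2 <= N)%nat ->
  lsum (seq 0 (S N)) (fun b => (INR b / INR N - t) ^ 2 * bernstein N b t) = t * (1 - t) / INR N.
Proof.
  intros H. assert (HN : 2 <= INR N) by (replace 2 with (INR 2) by (simpl; ring); apply le_INR; auto).
  rewrite (lsum_ext _ _ (fun b => ((INR N - 1) / INR N) * (falling_ratio N 2 b * bernstein N b t)
      + ((1 / INR N - 2 * t) * (falling_ratio N 1 b * bernstein N b t)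
      + t ^ 2 * (falling_ratio N 0 b * bernstein N b t)))).
  - rewrite !lsum_plus, !lsum_scal, <- !pow_bernstein_expansion by lia. field. lra.
  - intros b _. unfold falling_ratio; simpl prodn. rewrite !Rminus_0_r. field. lra.
Qed.

Lemma binomial_pos N b : 0 < C N b.
Proof.
  unfold C. pose proof (INR_fact_lt_0 N). pose proof (INR_fact_lt_0 b).
  pose proof (INR_fact_lt_0 (N - b)). apply Rdiv_lt_0_compat; auto. apply Rmult_lt_0_compat; auto.
Qed.

Lemma bernstein_nonneg N b t : 0 <= t <= 1 -> 0 <= bernstein N b t.
Proof.
  intros H. pose proof (binomial_pos N b). unfold bernstein.
  apply Rmult_le_pos; [apply Rmult_le_pos; [lra|]|]; apply pow_le; lra.
Qed.

Lemma bernstein_0_0 t : bernstein 0 0 t = 1.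
Proof. unfold bernstein, C; simpl. field. Qed.

Lemma falling_ratio_bound N a b : (b <= N)%nat -> 0 <= falling_ratio N a b <= 1.
Proof.
  intros H. destruct (Nat.lt_ge_cases b a); [rewrite falling_ratio_lt by auto; lra|].
  apply prodn_le1. intros k Hk.
  assert (INR k < INR b) by (apply lt_INR; lia). assert (INR b <= INR N) by (apply le_INR; lia).
  split; [apply Rlt_le, Rdiv_lt_0_compat; lra|apply Rdiv_le_1; lra].
Qed.

Lemma falling_ratio_factor_approx N a b k : (2 * a <= N)%nat -> (b <= N)%nat -> (k < a)%nat ->
  Rabs ((INR b - INR k) / (INR N - INR k) - INR b / INR N) <= 2 * INR a / INR N.
Proof.
  intros H1 H2 Hk.
  assert (Hb : INR b <= INR N) by (apply le_INR; auto).
  assert (Ha2 : 2 * INR a <= INR N)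
    by (replace 2 with (INR 2) by (simpl; ring); rewrite <- mult_INR; apply le_INR; auto).
  assert (Hk' : INR k < INR a) by (apply lt_INR; auto). pose proof (pos_INR k). pose proof (pos_INR b).
  assert (Hu : 0 < / (INR N - INR k)) by (apply Rinv_0_lt_compat; lra).
  assert (Hv : 0 < / INR N) by (apply Rinv_0_lt_compat; lra).
  assert (Eu : (INR N - INR k) * / (INR N - INR k) = 1) by (apply Rinv_r; lra).
  replace ((INR b - INR k) / (INR N - INR k) - INR b / INR N)
    with (- (INR k * ((INR N - INR b) * / (INR N - INR k)) * / INR N)) by (field; lra).
  assert (Hw : 0 <= (INR N - INR b) * / (INR N - INR k) <= 2).
  { split; [apply Rmult_le_pos; lra|].
    apply Rle_trans with (2 * (INR N - INR k) * / (INR N - INR k)).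
    - apply Rmult_le_compat_r; lra.
    - rewrite Rmult_assoc, Eu; lra. }
  rewrite Rabs_Ropp, Rabs_right by (apply Rle_ge; apply Rmult_le_pos; [apply Rmult_le_pos|]; lra).
  unfold Rdiv. apply Rmult_le_compat_r; [lra|]. nra.
Qed.

Lemma falling_ratio_approx N a b : (2 * a <= N)%nat -> (b <= N)%nat -> (1 <= N)%nat ->
  Rabs (falling_ratio N a b - (INR b / INR N) ^ a) <= 2 * INR a ^ 2 / INR N.
Proof.
  intros H1 H2 H3.
  assert (HN : 1 <= INR N) by (replace 1 with (INR 1) by (simpl; ring); apply le_INR; auto).
  assert (Hb : 0 <= INR b <= INR N) by (split; [apply pos_INR|apply le_INR; auto]).
  assert (Hbn : 0 <= INR b / INR N <= 1) by (split; [apply Rdiv_nonneg|apply Rdiv_le_1]; lra).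
  destruct (Nat.lt_ge_cases b a).
  - (* [(b/N)^a <= b/N < a/N] *)
    rewrite falling_ratio_lt by auto. destruct a; [lia|].
    assert (Hba : INR b + 1 <= INR (S a)) by (rewrite <- S_INR; apply le_INR; lia).
    rewrite Rminus_0_l, Rabs_Ropp, Rabs_right by (apply Rle_ge, pow_le; lra).
    change ((INR b / INR N) ^ S a) with (INR b / INR N * (INR b / INR N) ^ a).
    assert (0 <= (INR b / INR N) ^ a <= 1) by (split; [apply pow_le|apply pow_le_1]; lra).
    unfold Rdiv in *. assert (0 < / INR N) by (apply Rinv_0_lt_compat; lra).
    pose proof (pos_INR a). rewrite S_INR in *. nra.
  - rewrite pow_prodn. eapply Rle_trans; [apply prodn_diff|].
    + intros k Hk. split; auto. assert (INR k < INR b) by (apply lt_INR; lia).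
      split; [apply Rlt_le, Rdiv_lt_0_compat|apply Rdiv_le_1]; lra.
    + apply Rle_trans with (sum_upto (fun _ => 2 * INR a / INR N) a).
      * apply sum_upto_le. intros k Hk. apply falling_ratio_factor_approx; auto.
      * rewrite sum_upto_const. right; field; lra.
Qed.

(** * Polynomials positive on a unit cube *)

Definition monomial (m : nat) (al : nat -> nat) (y : point) : R := prodn (fun k => y k ^ al k) m.

Definition mpoly (m : nat) (mons : list (R * (nat -> nat))) (y : point) : R :=
  lsum mons (fun t => fst t * monomial m (snd t) y).

Definition cube_prod (m : nat) (a b : nat -> nat) (y : point) : R :=
  prodn (fun k => y k ^ a k * (1 - y k) ^ b k) m.

Definition bern_prod (Nv : nat -> nat) (m : nat) (q : nat -> nat) (y : point) : R :=
  prodn (fun k => bernstein (Nv k) (q k) (y k)) m.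

Definition bern_weight (Nv : nat -> nat) (m : nat) (al q : nat -> nat) : R :=
  prodn (fun k => falling_ratio (Nv k) (al k) (q k)) m.

Definition deg_on (J : nat -> Prop) (N : nat) (k : nat) : nat :=
  if excluded_middle_informative (J k) then N else 0%nat.

Definition bern_coef (Nv : nat -> nat) (m : nat) (mons : list (R * (nat -> nat))) (q : nat -> nat) : R :=
  lsum mons (fun t => fst t * bern_weight Nv m (snd t) q).

Definition grid_point (Nv : nat -> nat) (q : nat -> nat) (k : nat) : R := INR (q k) / INR (Nv k).

Lemma poly_in_monomial_expansion m (J : nat -> Prop) (Q : fn) :
  (forall j, J j -> (j < m)%nat) -> poly_in J Q ->
  exists mons : list (R * (nat -> nat)),
    (forall t, In t mons -> forall k, snd t k <> 0%nat -> J k) /\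
    forall y, Q y = mpoly m mons y.
Proof.
  unfold mpoly.
  intros HJ H; induction H.
  - exists ((c, fun _ => 0%nat) :: nil). split.
    + intros t [<-|[]] k Hk; simpl in Hk; lia.
    + intros y; simpl. unfold monomial. rewrite prodn_one; [ring|]. intros; simpl; auto.
  - exists ((1, fun k => if Nat.eq_dec k i then 1%nat else 0%nat) :: nil). split.
    + intros t [<-|[]] k Hk; simpl in Hk. destruct (Nat.eq_dec k i); [subst; auto|lia].
    + intros y; simpl. unfold monomial.
      rewrite (prodn_ext _ (fun k' => if Nat.eq_dec k' i then y i * (fun _ => 1) k' else (fun _ => 1) k')).
      * rewrite prodn_single, prodn_one by auto. ring.
      * intros k Hk. destruct (Nat.eq_dec k i); [subst|]; simpl; ring.
  - destruct IHpoly_in1 as [m1 [H1 E1]], IHpoly_in2 as [m2 [H2 E2]].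
    exists (m1 ++ m2). split.
    + intros t Ht. apply in_app_or in Ht. destruct Ht; [apply (H1 t)|apply (H2 t)]; auto.
    + intros y; rewrite lsum_app, E1, E2; auto.
  - destruct IHpoly_in1 as [m1 [H1 E1]], IHpoly_in2 as [m2 [H2 E2]].
    exists (flat_map (fun t1 => map (fun t2 => (fst t1 * fst t2, fun k => (snd t1 k + snd t2 k)%nat)) m2) m1).
    split.
    + intros t Ht k Hk. apply in_flat_map in Ht. destruct Ht as [t1 [Ht1 Ht2]]. apply in_map_iff in Ht2.
      destruct Ht2 as [t2 [<- Ht2]]. simpl in Hk. destruct (Nat.eq_dec (snd t1 k) 0).
      * apply (H2 t2); auto; lia.
      * apply (H1 t1); auto.
    + intros y. rewrite E1, E2, lsum_flat_map, (Rmult_comm (lsum m1 _)), <- lsum_scal.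
      apply lsum_ext; intros t1 _.
      rewrite lsum_map, (Rmult_comm (lsum m2 _)), <- lsum_scal. apply lsum_ext; intros t2 _.
      simpl. unfold monomial.
      rewrite (prodn_ext (fun k => y k ^ (snd t1 k + snd t2 k)) (fun k => y k ^ snd t1 k * y k ^ snd t2 k)).
      * rewrite prodn_mult; ring.
      * intros; apply pow_add.
Qed.

Fixpoint nat_sum (f : nat -> nat) (m : nat) : nat :=
  match m with O => O | S k => (nat_sum f k + f k)%nat end.

Lemma nat_sum_ge f m k : (k < m)%nat -> (f k <= nat_sum f m)%nat.
Proof.
  induction m; intros H; simpl; [lia|].
  destruct (Nat.eq_dec k m); [subst; lia|]. specialize (IHm ltac:(lia)); lia.
Qed.

Lemma exponents_bounded m (J : nat -> Prop) (mons : list (R * (nat -> nat))) :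
  (forall j, J j -> (j < m)%nat) -> (forall t, In t mons -> forall k, snd t k <> 0%nat -> J k) ->
  exists D, forall t, In t mons -> forall k, (snd t k <= D)%nat.
Proof.
  intros HJ; induction mons; intros H; [exists 0%nat; intros t []|].
  destruct IHmons as [D HD]; [intros t Ht; apply (H t); auto with datatypes|].
  exists (Nat.max D (nat_sum (snd a) m)). intros t [E|Ht] k.
  - subst t. destruct (Nat.eq_dec (snd a k) 0); [lia|].
    assert (k < m)%nat by (apply HJ, (H a); auto with datatypes).
    pose proof (nat_sum_ge (snd a) m k H0); lia.
  - specialize (HD t Ht k); lia.
Qed.

Lemma monomial_bernstein_expansion Nv m al y : (forall k, (al k <= Nv k)%nat) ->
  monomial m al y = lsum (grid Nv m) (fun q => bern_weight Nv m al q * bern_prod Nv m q y).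
Proof.
  intros Hal. unfold monomial.
  rewrite (prodn_ext _ (fun k => lsum (seq 0 (S (Nv k)))
      (fun b => falling_ratio (Nv k) (al k) b * bernstein (Nv k) b (y k)))).
  - rewrite <- grid_sum_prodn. apply lsum_ext; intros q _.
    unfold bern_weight, bern_prod. rewrite <- prodn_mult; auto.
  - intros k _. apply pow_bernstein_expansion; auto.
Qed.

Lemma bern_prod_cube_prod Nv m q y :
  bern_prod Nv m q y = prodn (fun k => C (Nv k) (q k)) m * cube_prod m q (fun k => (Nv k - q k)%nat) y.
Proof. unfold bern_prod, cube_prod, bernstein. rewrite <- prodn_mult. apply prodn_ext; intros; ring. Qed.

Lemma grid_point_in_cube (J : nat -> Prop) N m q : In q (grid (deg_on J N) m) ->
  forall k, (k < m)%nat -> 0 <= grid_point (deg_on J N) q k <= 1.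
Proof.
  intros Hq k Hk. unfold grid_point. pose proof (in_grid_le _ _ _ k Hq) as Gq.
  destruct (Nat.eq_dec (deg_on J N k) 0) as [E|E].
  - rewrite E in *. replace (q k) with 0%nat by lia. simpl. unfold Rdiv; rewrite Rmult_0_l; lra.
  - assert (0 < INR (deg_on J N k)) by (apply lt_0_INR; lia).
    assert (INR (q k) <= INR (deg_on J N k)) by (apply le_INR; auto).
    split; [apply Rdiv_nonneg; auto; apply pos_INR|apply Rdiv_le_1; auto].
Qed.

Lemma bern_weight_approx m (J : nat -> Prop) N D al q :
  (2 * D + 1 <= N)%nat -> In q (grid (deg_on J N) m) ->
  (forall k, al k <> 0%nat -> J k) -> (forall k, (al k <= D)%nat) ->
  Rabs (bern_weight (deg_on J N) m al q - monomial m al (grid_point (deg_on J N) q))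
    <= INR m * (2 * INR D ^ 2 / INR N).
Proof.
  intros HN Hq Hsup HD.
  assert (HNp : 1 <= INR N) by (replace 1 with (INR 1) by (simpl; ring); apply le_INR; lia).
  pose proof (grid_point_in_cube J N m q Hq) as Hcube.
  unfold bern_weight, monomial. eapply Rle_trans; [apply prodn_diff|].
  - intros k Hk. split; [apply falling_ratio_bound, in_grid_le with m; auto|].
    split; [apply pow_le|apply pow_le_1]; apply Hcube; auto.
  - rewrite <- sum_upto_const. apply sum_upto_le. intros k Hk.
    destruct (Nat.eq_dec (al k) 0) as [E|E].
    + rewrite E. unfold falling_ratio; simpl. rewrite Rminus_diag, Rabs_R0.
      apply Rdiv_nonneg; [nra|lra].
    + pose proof (Hsup k E) as Hk'.
      assert (NvN : deg_on J N k = N) by (unfold deg_on; destruct (excluded_middle_informative (J k)); tauto).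
      unfold grid_point. rewrite NvN. eapply Rle_trans.
      * apply falling_ratio_approx; [specialize (HD k); lia| |lia].
        pose proof (in_grid_le _ _ _ k Hq) as Gq. rewrite NvN in Gq; auto.
      * unfold Rdiv. apply Rmult_le_compat_r; [apply Rlt_le, Rinv_0_lt_compat; lra|].
        assert (INR (al k) <= INR D) by (apply le_INR; auto). pose proof (pos_INR (al k)). nra.
Qed.

Lemma mpoly_bernstein_expansion Nv m mons y : (forall t, In t mons -> forall k, (snd t k <= Nv k)%nat) ->
  mpoly m mons y = lsum (grid Nv m) (fun q => bern_coef Nv m mons q * bern_prod Nv m q y).
Proof.
  intros Hle. unfold mpoly.
  rewrite (lsum_ext _ _ (fun t => lsum (grid Nv m) (fun q => fst t * bern_weight Nv m (snd t) q * bern_prod Nv m q y))).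
  - rewrite lsum_swap. apply lsum_ext; intros q _. unfold bern_coef.
    rewrite Rmult_comm, <- lsum_scal. apply lsum_ext; intros; ring.
  - intros t Ht. rewrite (monomial_bernstein_expansion Nv), <- lsum_scal by auto.
    apply lsum_ext; intros; ring.
Qed.

Lemma bern_coef_approx m (J : nat -> Prop) N D mons q :
  (2 * D + 1 <= N)%nat -> In q (grid (deg_on J N) m) ->
  (forall t, In t mons -> forall k, snd t k <> 0%nat -> J k) -> (forall t, In t mons -> forall k, (snd t k <= D)%nat) ->
  Rabs (bern_coef (deg_on J N) m mons q - mpoly m mons (grid_point (deg_on J N) q))
    <= lsum mons (fun t => Rabs (fst t)) * (INR m * (2 * INR D ^ 2 / INR N)).
Proof.
  intros HN Hq Hsup HD. unfold bern_coef, mpoly. rewrite lsum_minus.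
  eapply Rle_trans; [apply lsum_abs|]. rewrite Rmult_comm, <- lsum_scal.
  apply lsum_le. intros t Ht. rewrite <- Rmult_minus_distr_l, Rabs_mult, Rmult_comm.
  apply Rmult_le_compat_r; [apply Rabs_pos|]. apply bern_weight_approx; auto. apply (Hsup t Ht).
Qed.

Lemma bern_coef_pos m (J : nat -> Prop) mons eps :
  (forall j, J j -> (j < m)%nat) -> (forall t, In t mons -> forall k, snd t k <> 0%nat -> J k) -> eps > 0 ->
  (forall y, (forall j, J j -> 0 <= y j <= 1) -> mpoly m mons y >= eps) ->
  exists N, (forall t, In t mons -> forall k, (snd t k <= deg_on J N k)%nat) /\
    forall q, In q (grid (deg_on J N) m) -> bern_coef (deg_on J N) m mons q > 0.
Proof.
  intros HJ Hsup Heps Hpos.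
  destruct (exponents_bounded m J mons HJ Hsup) as [D HD].
  set (Ss := lsum mons (fun t => Rabs (fst t))).
  assert (HS : 0 <= Ss) by (apply lsum_nonneg; intros; apply Rabs_pos).
  destruct (INR_unbounded_above (2 * Ss * INR m * INR D ^ 2 / eps) (2 * D + 1)) as [N [HN1 HN2]].
  assert (HNp : 1 <= INR N) by (replace 1 with (INR 1) by (simpl; ring); apply le_INR; lia).
  exists N. split.
  - intros t Ht k. unfold deg_on. destruct (excluded_middle_informative (J k)).
    + specialize (HD t Ht k); lia.
    + destruct (Nat.eq_dec (snd t k) 0); [lia|]. exfalso; apply n, (Hsup t Ht k); auto.
  - intros q Hq.
    assert (Qt : mpoly m mons (grid_point (deg_on J N) q) >= eps).
    { apply Hpos. intros j Hj. apply (grid_point_in_cube J N m q Hq); auto. }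
    pose proof (bern_coef_approx m J N D mons q HN1 Hq Hsup HD) as Hb. fold Ss in Hb.
    assert (HSK : Ss * (INR m * (2 * INR D ^ 2 / INR N)) < eps).
    { set (X := 2 * Ss * INR m * INR D ^ 2 / eps) in *.
      replace (Ss * (INR m * (2 * INR D ^ 2 / INR N))) with (X * eps / INR N) by (unfold X; field; lra).
      apply Rmult_lt_reg_r with (INR N); [lra|]. unfold Rdiv; rewrite Rmult_assoc, Rinv_l by lra. nra. }
    apply Rabs_le_inv in Hb. lra.
Qed.

Lemma cube_prod_representation m (J : nat -> Prop) (Q : fn) eps :
  (forall j, J j -> (j < m)%nat) -> poly_in J Q -> eps > 0 ->
  (forall y, (forall j, J j -> 0 <= y j <= 1) -> Q y >= eps) ->
  exists Cl : list ((nat -> nat) * (nat -> nat) * R),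
    NoDup (map (fun t => let '(a, b, _) := t in (a, b)) Cl) /\
    (forall a b c, In (a, b, c) Cl -> c > 0 /\ (forall j, (a j <> 0)%nat \/ (b j <> 0)%nat -> J j)) /\
    (forall y, Q y = lsum Cl (fun t => let '(a, b, c) := t in c * cube_prod m a b y)).
Proof.
  intros HJ HQ Heps Hpos.
  destruct (poly_in_monomial_expansion m J Q HJ HQ) as [mons [Hsup EQ]].
  destruct (bern_coef_pos m J mons eps HJ Hsup Heps) as [N [Hle Hbq]].
  { intros y Hy. rewrite <- EQ. auto. }
  set (Nv := deg_on J N) in *. set (bq := bern_coef Nv m mons) in *.
  exists (map (fun q => (q, fun k => (Nv k - q k)%nat, bq q * prodn (fun k => C (Nv k) (q k)) m)) (grid Nv m)).
  split; [|split].
  - rewrite map_map. apply Injective_map_NoDup; [|apply grid_NoDup].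
    intros q1 q2 E. inversion E; auto.
  - intros a b c H. apply in_map_iff in H. destruct H as [q [E Hq]]. inversion E; subst a b c. split.
    + apply Rmult_gt_0_compat; [apply Hbq; auto|]. apply prodn_pos; intros; apply binomial_pos.
    + intros j Hj. pose proof (in_grid_le _ _ _ j Hq).
      assert (Nv j <> 0%nat) by lia.
      unfold Nv, deg_on in H0. destruct (excluded_middle_informative (J j)); [auto|lia].
  - intros y. rewrite EQ, (mpoly_bernstein_expansion Nv) by auto. rewrite lsum_map.
    apply lsum_ext; intros q Hq. rewrite bern_prod_cube_prod. unfold bq. ring.
Qed.

(** * Sequential compactness *)

Definition strict_incr (phi : nat -> nat) : Prop := forall k, (phi k < phi (S k))%nat.

Lemma strict_incr_lt phi : strict_incr phi -> forall a b, (a < b)%nat -> (phi a < phi b)%nat.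
Proof.
  intros H a b Hab. induction b; [lia|]. destruct (Nat.eq_dec a b); [subst; auto|].
  specialize (IHb ltac:(lia)). specialize (H b). lia.
Qed.

Lemma strict_incr_comp phi psi : strict_incr phi -> strict_incr psi -> strict_incr (fun k => phi (psi k)).
Proof. intros Hphi Hpsi k. apply strict_incr_lt; auto. Qed.

Lemma strict_incr_ge phi : strict_incr phi -> forall k, (k <= phi k)%nat.
Proof. intros H k; induction k; [lia|]. specialize (H k); lia. Qed.

Lemma Un_cv_subseq (u : nat -> R) l phi : Un_cv u l -> strict_incr phi -> Un_cv (fun k => u (phi k)) l.
Proof.
  intros H Hp e He. destruct (H e He) as [N HN]. exists N; intros n Hn. apply HN.
  pose proof (strict_incr_ge phi Hp n); lia.
Qed.

Lemma inv_succ_small eps : eps > 0 -> exists N, forall n, (N <= n)%nat -> / (INR n + 1) < eps.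
Proof.
  intros He. destruct (INR_unbounded (/ eps)) as [N HN]. exists N. intros n Hn.
  assert (INR N <= INR n) by (apply le_INR; auto). pose proof (pos_INR n).
  apply Rmult_lt_reg_r with (INR n + 1); [lra|]. rewrite Rinv_l by lra.
  assert (/ eps * eps = 1) by (apply Rinv_l; lra). nra.
Qed.

Lemma Un_cv_div_succ c : Un_cv (fun k => c / (INR k + 1)) 0.
Proof.
  intros e He. destruct (Req_dec c 0) as [E|E].
  - exists 0%nat; intros; unfold R_dist; rewrite E; unfold Rdiv.
    rewrite Rmult_0_l, Rminus_0_r, Rabs_R0; auto.
  - assert (Hc : 0 < Rabs c) by (apply Rabs_pos_lt; auto).
    destruct (inv_succ_small (e / Rabs c)) as [N HN]; [apply Rdiv_lt_0_compat; auto|].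
    exists N; intros n Hn. unfold R_dist. rewrite Rminus_0_r. unfold Rdiv. rewrite Rabs_mult.
    pose proof (pos_INR n). rewrite (Rabs_right (/ _)) by (apply Rle_ge, Rlt_le, Rinv_0_lt_compat; lra).
    specialize (HN n Hn). apply Rmult_lt_reg_l with (/ Rabs c); [apply Rinv_0_lt_compat; auto|].
    rewrite <- Rmult_assoc, Rinv_l by lra. rewrite Rmult_comm. unfold Rdiv in HN. lra.
Qed.

Lemma Un_cv_bounds (s : nat -> R) l a b : Un_cv s l -> (forall k, a <= s k <= b) -> a <= l <= b.
Proof.
  intros H Hb. split.
  - apply Rle_cv_lim with (Un := fun _ => a) (Vn := s); [intros k; apply Hb|apply Un_cv_const|exact H].
  - apply Rle_cv_lim with (Un := s) (Vn := fun _ => b); [intros k; apply Hb|exact H|apply Un_cv_const].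
Qed.

Lemma Un_cv_sq_le_zero (s v : nat -> R) a : Un_cv s a -> Un_cv v 0 -> (forall k, s k * s k <= v k) -> a = 0.
Proof.
  intros Hs Hv Hle.
  assert (a * a <= 0 * 0) by (apply Rle_cv_lim with (Un := fun k => s k * s k) (Vn := v);
                              [auto|apply CV_mult; auto|rewrite Rmult_0_l; auto]).
  nra.
Qed.

Lemma bolzano_weierstrass_subseq (u : nat -> R) M : (forall k, Rabs (u k) <= M) ->
  exists phi l, strict_incr phi /\ Un_cv (fun k => u (phi k)) l.
Proof.
  intros Hb.
  destruct (Bolzano_Weierstrass u (fun c => - M <= c <= M) (compact_P3 (- M) M)) as [l Hl].
  { intros k; apply Rabs_le_inv; auto. }
  assert (Hs : forall Nk : nat * nat,
             exists p, (fst Nk <= p)%nat /\ Rabs (u p - l) < / (INR (snd Nk) + 1)).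
  { intros [N k]. simpl.
    assert (Hp : 0 < / (INR k + 1)) by (apply Rinv_0_lt_compat; pose proof (pos_INR k); lra).
    destruct (Hl (fun y => Rabs (y - l) < / (INR k + 1)) N) as [p [Hp1 Hp2]].
    - exists (mkposreal _ Hp). intros y Hy. unfold disc in Hy. simpl in Hy. auto.
    - exists p; auto. }
  destruct (choice _ Hs) as [sel Hsel].
  set (phi := fix phi k := match k with O => sel (0%nat, 0%nat) | S k' => sel (S (phi k'), S k') end).
  exists phi, l. split.
  - intros k. simpl. destruct (Hsel (S (phi k), S k)) as [A _]. simpl in A. lia.
  - assert (Hd : forall k, Rabs (u (phi k) - l) < / (INR k + 1)).
    { intros [|k]; simpl phi; [apply (Hsel (0%nat, 0%nat))|apply (Hsel (S (phi k), S k))]. }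
    intros e He. destruct (inv_succ_small e He) as [N HN]. exists N; intros n Hn. unfold R_dist.
    specialize (Hd n); specialize (HN n Hn); lra.
Qed.

Lemma bolzano_weierstrass_coords (L : list nat) (u : nat -> point) M :
  (forall k i, In i L -> Rabs (u k i) <= M) ->
  exists phi x, strict_incr phi /\ forall i, In i L -> Un_cv (fun k => u (phi k) i) (x i).
Proof.
  revert u; induction L as [|i L IH]; intros u Hb.
  - exists (fun k => k), (fun _ => 0). split; [intros k; lia|intros i []].
  - destruct (IH u) as [phi1 [x1 [H1 H2]]]; [intros k j Hj; apply Hb; simpl; auto|].
    destruct (bolzano_weierstrass_subseq (fun k => u (phi1 k) i) M) as [psi [l [H3 H4]]].
    { intros; apply Hb; simpl; auto. }
    exists (fun k => phi1 (psi k)), (fun j => if Nat.eq_dec j i then l else x1 j). split.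
    + apply strict_incr_comp; auto.
    + intros j Hj. destruct (Nat.eq_dec j i); [subst; auto|].
      destruct Hj as [E|Hj]; [congruence|]. apply (Un_cv_subseq (fun k => u (phi1 k) j)); auto.
Qed.

Lemma bounded_pred_enum (P : nat -> Prop) n : (forall i, P i -> (i < n)%nat) ->
  exists l, forall i, In i l <-> P i.
Proof.
  revert P; induction n; intros P HP.
  - exists nil. intros i; split; [intros []|intros H; specialize (HP i H); lia].
  - destruct (IHn (fun i => P i /\ (i < n)%nat)) as [l Hl]; [intros i [_ H]; auto|].
    destruct (excluded_middle_informative (P n)).
    + exists (n :: l). intros i; split.
      * intros [E|H]; [subst; auto|apply Hl in H; tauto].
      * intros H. destruct (Nat.eq_dec i n); [left; auto|right; apply Hl; split; auto].
        specialize (HP i H); lia.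
    + exists l. intros i; split; [intros H; apply Hl in H; tauto|].
      intros H. apply Hl. split; auto. specialize (HP i H). destruct (Nat.eq_dec i n); [subst; tauto|lia].
Qed.

Lemma compact_in_bound_above (U : nat -> Prop) (K : point -> Prop) M0 : compact_in U K ->
  exists M, M0 <= M /\ forall x, K x -> forall i, U i -> Rabs (x i) <= M.
Proof.
  intros [[M HM] _]. exists (Rmax M0 M). split; [apply Rmax_l|]. intros x Hx i Hi.
  specialize (HM x Hx i Hi). pose proof (Rmax_r M0 M); lra.
Qed.

Lemma compact_in_subseq n (U : nat -> Prop) (K : point -> Prop) (u : nat -> point) :
  (forall i, U i -> (i < n)%nat) -> compact_in U K -> (forall k, K (u k)) ->
  exists phi x, strict_incr phi /\ (forall i, U i -> Un_cv (fun k => u (phi k) i) (x i)) /\ K x.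
Proof.
  intros HU [[M HM] Hcl] Hu.
  destruct (bounded_pred_enum U n HU) as [Ul HUl].
  destruct (bolzano_weierstrass_coords Ul u M) as [phi [x [Hphi Hx]]].
  { intros k i Hi. apply HM; [apply Hu|apply HUl; auto]. }
  exists phi, x. assert (Hcv : forall i, U i -> Un_cv (fun k => u (phi k) i) (x i)) by (intros i Hi; apply Hx, HUl; auto).
  split; [auto|split; [auto|]]. apply (Hcl (fun k => u (phi k))); auto.
Qed.

(** * Splitting a positive sum across shared variables *)

Definition ind_on (Y : nat -> Prop) (k : nat) : R := if excluded_middle_informative (Y k) then 1 else 0.

Definition sqdist_on (Y : nat -> Prop) (n : nat) (x y : point) : R :=
  sum_upto (fun k => ind_on Y k * (x k - y k) ^ 2) n.

Definition to_unit (Rb : R) (x : point) (k : nat) : R := (x k + Rb) / (2 * Rb).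

Lemma ind_on_nonneg Y k : 0 <= ind_on Y k.
Proof. unfold ind_on. destruct (excluded_middle_informative (Y k)); lra. Qed.

Lemma sqdist_on_nonneg Y n x y : 0 <= sqdist_on Y n x y.
Proof. apply sum_upto_nonneg; intros; apply Rmult_le_pos; [apply ind_on_nonneg|apply pow2_ge_0]. Qed.

Lemma sqdist_on_term Y n x y i : Y i -> (i < n)%nat -> (x i - y i) ^ 2 <= sqdist_on Y n x y.
Proof.
  intros Hi Hin. unfold sqdist_on.
  replace ((x i - y i) ^ 2) with (ind_on Y i * (x i - y i) ^ 2)
    by (unfold ind_on; destruct (excluded_middle_informative (Y i)); [ring|tauto]).
  apply (sum_upto_term (fun k => ind_on Y k * (x k - y k) ^ 2)); auto.
  intros; apply Rmult_le_pos; [apply ind_on_nonneg|apply pow2_ge_0].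
Qed.

Lemma sqdist_on_triangle Y n x y z : sqdist_on Y n x y <= 2 * sqdist_on Y n z x + 2 * sqdist_on Y n z y.
Proof.
  unfold sqdist_on. rewrite <- !sum_upto_scal, <- sum_upto_plus. apply sum_upto_le. intros k _.
  pose proof (ind_on_nonneg Y k). pose proof (pow2_ge_0 (2 * z k - x k - y k)).
  assert ((x k - y k) ^ 2 <= 2 * (z k - x k) ^ 2 + 2 * (z k - y k) ^ 2) by nra. nra.
Qed.

Lemma to_unit_bound Rb x k : Rb > 0 -> Rabs (x k) <= Rb -> 0 <= to_unit Rb x k <= 1.
Proof.
  intros HR H. apply Rabs_le_inv in H. unfold to_unit.
  split; [apply Rdiv_nonneg|apply Rdiv_le_1]; lra.
Qed.

Lemma sqdist_on_limits_agree n (Y : nat -> Prop) Rb (a b : nat -> point) (v : nat -> R) xa xb i :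
  Rb > 0 -> Y i -> (i < n)%nat -> Un_cv (fun k => a k i) (xa i) -> Un_cv (fun k => b k i) (xb i) ->
  Un_cv v 0 -> (forall k, sqdist_on Y n (to_unit Rb (a k)) (to_unit Rb (b k)) <= v k) -> xa i = xb i.
Proof.
  intros HR Hi Hin Ha Hb Hv Hd.
  assert (E : to_unit Rb xa i - to_unit Rb xb i = 0).
  { apply (Un_cv_sq_le_zero (fun k => to_unit Rb (a k) i - to_unit Rb (b k) i) v); auto.
    - apply CV_minus; unfold to_unit, Rdiv; apply CV_mult; try apply Un_cv_const;
        apply CV_plus; auto; apply Un_cv_const.
    - intros k. specialize (Hd k).
      pose proof (sqdist_on_term Y n (to_unit Rb (a k)) (to_unit Rb (b k)) i Hi Hin). lra. }
  apply Rminus_diag_uniq in E. unfold to_unit in E.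
  replace (xa i) with ((xa i + Rb) / (2 * Rb) * (2 * Rb) - Rb) by (field; lra).
  rewrite E. field; lra.
Qed.

(* Compactness turns the positivity of [A x + G x'] on glued pairs into a uniform margin
   for pairs that merely nearly agree on the shared variables. *)
Lemma glued_positivity_margin n (U V : nat -> Prop) (K1 K2 : point -> Prop) (A G : fn) Rb :
  Rb > 0 -> (forall i, U i -> (i < n)%nat) -> (forall i, V i -> (i < n)%nat) ->
  poly_in U A -> poly_in V G -> compact_in U K1 -> compact_in V K2 ->
  (forall x x', K1 x -> K2 x' -> (forall i, U i -> V i -> x i = x' i) -> A x + G x' > 0) ->
  exists eps eta, eps > 0 /\ eta > 0 /\ forall x x', K1 x -> K2 x' ->
    sqdist_on (fun i => U i /\ V i) n (to_unit Rb x) (to_unit Rb x') <= eps -> A x + G x' >= eta.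
Proof.
  intros HR HU HV HA HG HK1 HK2 Hpos.
  set (Y := fun i => U i /\ V i).
  apply NNPP. intros H.
  assert (Hk : forall k : nat, exists p : point * point, K1 (fst p) /\ K2 (snd p) /\
     sqdist_on Y n (to_unit Rb (fst p)) (to_unit Rb (snd p)) <= / (INR k + 1) /\
     A (fst p) + G (snd p) < / (INR k + 1)).
  { intros k. apply not_all_not_ex. intros H'. apply H. exists (/ (INR k + 1)), (/ (INR k + 1)).
    assert (0 < / (INR k + 1)) by (apply Rinv_0_lt_compat; pose proof (pos_INR k); lra).
    split; [auto|split; [auto|]]. intros x x' H1 H2 H3.
    apply Rnot_lt_ge. intros H4. apply (H' (x, x')); simpl; auto. }
  destruct (choice _ Hk) as [ps Hps].
  destruct (compact_in_subseq n U K1 (fun k => fst (ps k)) HU HK1) as [phi [xs [Hphi [Hxs K1s]]]].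
  { intros k; apply Hps. }
  destruct (compact_in_subseq n V K2 (fun k => snd (ps (phi k))) HV HK2) as [psi [xs' [Hpsi [Hxs' K2s]]]].
  { intros k; apply Hps. }
  set (chi := fun k => phi (psi k)).
  assert (Hchi : strict_incr chi) by (apply (strict_incr_comp phi psi); auto).
  assert (Cx : forall i, U i -> Un_cv (fun k => fst (ps (chi k)) i) (xs i)).
  { intros i Hi. apply (Un_cv_subseq (fun k => fst (ps (phi k)) i)); auto. }
  assert (Hinv : Un_cv (fun k => 1 / (INR (chi k) + 1)) 0)
    by (apply (Un_cv_subseq (fun k => 1 / (INR k + 1))); auto; apply Un_cv_div_succ).
  assert (Hagree : forall i, U i -> V i -> xs i = xs' i).
  { intros i Hu Hv.
    apply (sqdist_on_limits_agree n Y Rb (fun k => fst (ps (chi k))) (fun k => snd (ps (chi k)))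
                                  (fun k => 1 / (INR (chi k) + 1))); auto.
    - split; auto.
    - intros k. destruct (Hps (chi k)) as [_ [_ [Hd _]]]. unfold Rdiv; lra. }
  assert (Hlim : A xs + G xs' <= 0).
  { apply Rle_cv_lim with (Un := fun k => A (fst (ps (chi k))) + G (snd (ps (chi k))))
                          (Vn := fun k => 1 / (INR (chi k) + 1)); auto.
    - intros k. destruct (Hps (chi k)) as [_ [_ [_ Hl]]]. unfold Rdiv; lra.
    - apply CV_plus; [apply (poly_in_continuous U A HA)|apply (poly_in_continuous V G HG)]; auto. }
  specialize (Hpos xs xs' K1s K2s Hagree). lra.
Qed.

Lemma separating_thresholds {Q T T'} (X : Q -> T -> Prop) (Y : Q -> T' -> Prop)
  (a : T -> R) (b : T' -> R) MA MB eta :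
  0 <= MA -> 0 <= MB -> eta > 0 ->
  (forall q x, X q x -> Rabs (a x) <= MA) -> (forall q y, Y q y -> Rabs (b y) <= MB) ->
  (forall q x y, X q x -> Y q y -> a x + b y >= eta) ->
  exists v : Q -> R, forall q, Rabs (v q) <= MA + MB + eta /\
    (forall x, X q x -> a x - v q >= eta / 2) /\ (forall y, Y q y -> b y + v q >= eta / 2).
Proof.
  intros HMA HMB Heta Ha Hb Hab.
  apply (choice (fun q v => Rabs v <= MA + MB + eta /\
    (forall x, X q x -> a x - v >= eta / 2) /\ (forall y, Y q y -> b y + v >= eta / 2))). intros q.
  set (E := fun s => s = - MA - eta \/ exists y, Y q y /\ s = - b y).
  destruct (completeness E) as [sp [Hub Hlub]].
  - exists MB. intros s [->|[y [Hy ->]]]; [lra|]. specialize (Hb q y Hy). apply Rabs_le_inv in Hb; lra.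
  - exists (- MA - eta); left; auto.
  - (* [v q] sits half-way above the supremum of the values [- b y] *)
    exists (sp + eta / 2).
    assert (Hsp1 : - MA - eta <= sp) by (apply Hub; left; auto).
    assert (Hsp2 : sp <= MB).
    { apply Hlub. intros s [->|[y [Hy ->]]]; [lra|]. specialize (Hb q y Hy). apply Rabs_le_inv in Hb; lra. }
    split; [|split].
    + apply Rabs_le. lra.
    + intros x Hx. assert (sp <= a x - eta); [|lra].
      apply Hlub. intros s [->|[y [Hy ->]]].
      * specialize (Ha q x Hx). apply Rabs_le_inv in Ha; lra.
      * specialize (Hab q x y Hx Hy). lra.
    + intros y Hy. assert (- b y <= sp) by (apply Hub; right; exists y; auto). lra.
Qed.

Lemma weighted_average_pos {A} (L : list A) (w d u : A -> R) eps eta Bd delta :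
  eps > 0 -> eta > 0 -> 0 <= Bd ->
  (forall q, In q L -> 0 <= w q) -> lsum L w = 1 ->
  (forall q, In q L -> 0 <= d q) -> lsum L (fun q => d q * w q) <= delta ->
  (forall q, In q L -> u q >= - Bd) -> (forall q, In q L -> d q <= eps / 4 -> u q >= eta / 2) ->
  (eta / 2 + Bd) * 4 / eps * delta < eta / 2 ->
  lsum L (fun q => u q * w q) > 0.
Proof.
  intros Heps Heta HBd Hw0 Hw1 Hd0 Hdelta Hlow Hnear Hsmall.
  set (c := (eta / 2 + Bd) * 4 / eps) in *.
  assert (Hc : 0 <= c) by (unfold c; apply Rdiv_nonneg; lra).
  apply Rlt_le_trans with (lsum L (fun q => (eta / 2 - c * d q) * w q)).
  - rewrite (lsum_ext _ (fun q => (eta / 2 - c * d q) * w q)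
               (fun q => eta / 2 * w q + (- c) * (d q * w q))) by (intros; ring).
    rewrite lsum_plus, !lsum_scal, Hw1. nra.
  - apply lsum_le. intros q Hq. apply Rmult_le_compat_r; [auto|].
    destruct (Rle_lt_dec (d q) (eps / 4)) as [Hd|Hd].
    + specialize (Hnear q Hq Hd). specialize (Hd0 q Hq). nra.
    + assert (c * d q >= eta / 2 + Bd).
      { unfold c. replace ((eta / 2 + Bd) * 4 / eps * d q) with ((eta / 2 + Bd) * (4 * d q / eps)) by (field; lra).
        assert (1 <= 4 * d q / eps)
          by (apply Rmult_le_reg_r with eps; [lra|]; unfold Rdiv; rewrite Rmult_assoc, Rinv_l; lra).
        nra. }
      specialize (Hlow q Hq). lra.
Qed.

Lemma bern_prod_sum_1 Nv n t : lsum (grid Nv n) (fun q => bern_prod Nv n q t) = 1.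
Proof.
  unfold bern_prod. rewrite (grid_sum_prodn Nv n (fun k b => bernstein (Nv k) b (t k))).
  apply prodn_one. intros; apply bernstein_sum_1.
Qed.

Lemma bern_prod_average_affine Nv n t a c (v : (nat -> nat) -> R) :
  lsum (grid Nv n) (fun q => (a + c * v q) * bern_prod Nv n q t)
  = a + c * lsum (grid Nv n) (fun q => v q * bern_prod Nv n q t).
Proof.
  rewrite (lsum_ext _ _ (fun q => a * bern_prod Nv n q t + c * (v q * bern_prod Nv n q t))) by (intros; ring).
  rewrite lsum_plus, !lsum_scal, bern_prod_sum_1. ring.
Qed.

Lemma bern_prod_marginal Nv n t k (psi : nat -> R) : (k < n)%nat ->
  lsum (grid Nv n) (fun q => psi (q k) * bern_prod Nv n q t) =
  lsum (seq 0 (S (Nv k))) (fun b => psi b * bernstein (Nv k) b (t k)).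
Proof.
  intros Hk. set (F := fun k' b => if Nat.eq_dec k' k then psi b * bernstein (Nv k') b (t k')
                                  else bernstein (Nv k') b (t k')).
  rewrite (lsum_ext _ _ (fun q => prodn (fun k' => F k' (q k')) n)).
  - rewrite grid_sum_prodn.
    rewrite (prodn_ext _ (fun k' => if Nat.eq_dec k' k
        then lsum (seq 0 (S (Nv k))) (fun b => psi b * bernstein (Nv k) b (t k)) * (fun _ => 1) k'
        else (fun _ => 1) k')).
    + rewrite prodn_single, prodn_one; auto; ring.
    + intros k' Hk'. unfold F. destruct (Nat.eq_dec k' k); [subst k'; ring|apply bernstein_sum_1].
  - intros q _. unfold bern_prod.
    rewrite <- (prodn_single (fun k' => bernstein (Nv k') (q k') (t k')) n k (psi (q k)) Hk).
    apply prodn_ext; intros k' _. unfold F. destruct (Nat.eq_dec k' k); [subst k'|]; auto.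
Qed.

Lemma bern_prod_nonneg (Y : nat -> Prop) N n q t : In q (grid (deg_on Y N) n) ->
  (forall k, Y k -> 0 <= t k <= 1) -> 0 <= bern_prod (deg_on Y N) n q t.
Proof.
  intros Hq Ht. apply prodn_nonneg. intros k Hk.
  pose proof (in_grid_le _ _ _ k Hq) as Gq. unfold deg_on in *.
  destruct (excluded_middle_informative (Y k)) as [Hy|Hy].
  - apply bernstein_nonneg; auto.
  - replace (q k) with 0%nat by lia. rewrite bernstein_0_0; lra.
Qed.

(* Coordinatewise, this is the variance [t (1 - t) / N] of the binomial distribution. *)
Lemma bern_prod_sqdist_moment (Y : nat -> Prop) N n t : (2 <= N)%nat ->
  (forall k, Y k -> 0 <= t k <= 1) ->
  lsum (grid (deg_on Y N) n)
    (fun q => sqdist_on Y n (grid_point (deg_on Y N) q) t * bern_prod (deg_on Y N) n q t)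
  <= INR n / INR N.
Proof.
  intros HN2 Ht. assert (HN : 2 <= INR N) by (replace 2 with (INR 2) by (simpl; ring); apply le_INR; auto).
  set (Nv := deg_on Y N). unfold sqdist_on.
  rewrite (lsum_ext _ _ (fun q => sum_upto (fun k => ind_on Y k * (grid_point Nv q k - t k) ^ 2 * bern_prod Nv n q t) n)).
  2:{ intros q _. rewrite Rmult_comm, <- sum_upto_scal. apply sum_upto_ext; intros; ring. }
  rewrite lsum_sum_upto.
  replace (INR n / INR N) with (sum_upto (fun _ => / INR N) n) by (rewrite sum_upto_const; unfold Rdiv; ring).
  apply sum_upto_le. intros k Hk.
  unfold grid_point. rewrite (bern_prod_marginal Nv n t k (fun b => ind_on Y k * (INR b / INR (Nv k) - t k) ^ 2) Hk).
  assert (0 < / INR N) by (apply Rinv_0_lt_compat; lra).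
  unfold ind_on, Nv, deg_on. destruct (excluded_middle_informative (Y k)) as [Hy|Hy].
  - rewrite (lsum_ext _ _ (fun b => (INR b / INR N - t k) ^ 2 * bernstein N b (t k))) by (intros; ring).
    rewrite bernstein_second_moment by auto. specialize (Ht k Hy).
    unfold Rdiv. assert (t k * (1 - t k) <= 1) by nra. nra.
  - rewrite (lsum_ext _ _ (fun _ => 0)) by (intros; ring). rewrite lsum_zero. lra.
Qed.

Lemma poly_in_bern_prod_to_unit (Y : nat -> Prop) N n q Rb : In q (grid (deg_on Y N) n) ->
  poly_in Y (fun x => bern_prod (deg_on Y N) n q (to_unit Rb x)).
Proof.
  intros Hq. apply poly_in_prodn. intros k Hk. pose proof (in_grid_le _ _ _ k Hq) as Gq.
  unfold deg_on in *. destruct (excluded_middle_informative (Y k)) as [Hy|Hy].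
  - assert (Hu : poly_in Y (fun x => to_unit Rb x k)).
    { apply poly_in_ext with (fun x => (x k + Rb) * / (2 * Rb)); [|intros; reflexivity].
      apply (pi_mul Y (fun x => x k + Rb) (fun _ => / (2 * Rb))); [|constructor].
      apply (pi_add Y (fun x => x k) (fun _ => Rb)); constructor; auto. }
    unfold bernstein. apply pi_mul; [apply pi_mul; [apply pi_const|]|]; apply poly_in_pow; auto.
    apply poly_in_sub; [constructor|auto].
  - replace (q k) with 0%nat by lia. apply poly_in_ext with (fun _ => 1); [constructor|].
    intros; rewrite bernstein_0_0; auto.
Qed.

Lemma div_INR_small (a X : R) : X > 0 -> exists N, (2 <= N)%nat /\ a / INR N < X.
Proof.
  intros HX. destruct (INR_unbounded_above (Rabs a / X) 2) as [N [HN1 HN2]]. exists N. split; auto.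
  assert (HN : 2 <= INR N) by (replace 2 with (INR 2) by (simpl; ring); apply le_INR; auto).
  apply Rle_lt_trans with (Rabs a / INR N).
  - unfold Rdiv. apply Rmult_le_compat_r; [apply Rlt_le, Rinv_0_lt_compat; lra|apply Rle_abs].
  - apply Rmult_lt_reg_r with (INR N); [lra|]. unfold Rdiv. rewrite Rmult_assoc, Rinv_l by lra.
    apply Rmult_lt_reg_r with (/ X); [apply Rinv_0_lt_compat; lra|].
    replace (X * INR N * / X) with (INR N) by (field; lra). unfold Rdiv in HN2. lra.
Qed.

Lemma bernstein_average_pos (Y : nat -> Prop) n N Rb eps eta Bd (u : (nat -> nat) -> R) x :
  (2 <= N)%nat -> Rb > 0 -> eps > 0 -> eta > 0 -> 0 <= Bd -> (forall k, Y k -> Rabs (x k) <= Rb) ->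
  (eta / 2 + Bd) * 4 / eps * (INR n / INR N) < eta / 2 -> (forall q, u q >= - Bd) ->
  (forall q, sqdist_on Y n (grid_point (deg_on Y N) q) (to_unit Rb x) <= eps / 4 -> u q >= eta / 2) ->
  lsum (grid (deg_on Y N) n) (fun q => u q * bern_prod (deg_on Y N) n q (to_unit Rb x)) > 0.
Proof.
  intros HN HR Heps Heta HBd Hx Hsmall Hlow Hnear.
  assert (Ht : forall k, Y k -> 0 <= to_unit Rb x k <= 1) by (intros k Hk; apply to_unit_bound; auto).
  apply (weighted_average_pos _ _ (fun q => sqdist_on Y n (grid_point (deg_on Y N) q) (to_unit Rb x))
           _ eps eta Bd (INR n / INR N)); auto.
  - intros q Hq. apply bern_prod_nonneg; auto.
  - apply bern_prod_sum_1.
  - intros; apply sqdist_on_nonneg.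
  - apply bern_prod_sqdist_moment; auto.
Qed.

(* The correction [hh] averages, with the Bernstein weights of the shared variables, thresholds
   [vv q] separating [A] from [- G] near each grid point [q]. *)
Lemma poly_split n (U V : nat -> Prop) (K1 K2 : point -> Prop) (A G : fn) :
  (forall i, U i -> (i < n)%nat) -> (forall i, V i -> (i < n)%nat) ->
  poly_in U A -> poly_in V G -> compact_in U K1 -> compact_in V K2 ->
  (forall x x', K1 x -> K2 x' -> (forall i, U i -> V i -> x i = x' i) -> A x + G x' > 0) ->
  exists hh, poly_in (fun i => U i /\ V i) hh /\
    (forall x, K1 x -> A x - hh x > 0) /\ (forall x, K2 x -> G x + hh x > 0).
Proof.
  intros HU HV HA HG HK1 HK2 Hpos.
  destruct (compact_in_bound_above U K1 1 HK1) as [R1 [HR1 HB1]].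
  destruct (compact_in_bound_above V K2 R1 HK2) as [Rb [HRb HB2]].
  assert (HRb0 : Rb > 0) by lra.
  assert (HB1' : forall x, K1 x -> forall i, U i -> Rabs (x i) <= Rb)
    by (intros x Hx i Hi; specialize (HB1 x Hx i Hi); lra).
  destruct (glued_positivity_margin n U V K1 K2 A G Rb HRb0 HU HV HA HG HK1 HK2 Hpos)
    as [eps [eta [Heps [Heta HED]]]].
  set (Y := fun i => U i /\ V i) in *.
  destruct (poly_in_bounded_on U K1 A Rb HA HB1') as [MA [MA_0 HMA]].
  destruct (poly_in_bounded_on V K2 G Rb HG HB2) as [MG [MG_0 HMG]].
  set (Bd := 2 * (MA + MG) + eta).
  destruct (div_INR_small ((eta / 2 + Bd) * 4 / eps * INR n) (eta / 2) ltac:(lra)) as [N [HN Hsmall]].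
  set (Nv := deg_on Y N).
  set (dq := fun q (x : point) => sqdist_on Y n (grid_point Nv q) (to_unit Rb x)).
  destruct (separating_thresholds (fun q x => K1 x /\ dq q x <= eps / 4) (fun q x' => K2 x' /\ dq q x' <= eps / 4)
              A G MA MG eta) as [vv Hvv]; auto.
  { intros q x [Hx _]; auto. }
  { intros q x [Hx _]; auto. }
  { intros q x x' [Hx Hdx] [Hx' Hdx']. apply HED; auto.
    pose proof (sqdist_on_triangle Y n (to_unit Rb x) (to_unit Rb x') (grid_point Nv q)).
    unfold dq in *. lra. }
  set (w := fun q (x : point) => bern_prod Nv n q (to_unit Rb x)).
  set (hh := fun x => lsum (grid Nv n) (fun q => vv q * w q x)).
  assert (Havg : forall (x : point) (u : (nat -> nat) -> R),
    (forall k, Y k -> Rabs (x k) <= Rb) -> (forall q, u q >= - Bd) ->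
    (forall q, dq q x <= eps / 4 -> u q >= eta / 2) -> lsum (grid Nv n) (fun q => u q * w q x) > 0).
  { intros x u Hx Hlow Hnear. apply (bernstein_average_pos Y n N Rb eps eta Bd); auto.
    - unfold Bd; lra.
    - unfold Rdiv in *; rewrite <- Rmult_assoc; auto. }
  exists hh. split; [|split].
  - apply poly_in_lsum. intros q Hq. apply poly_in_scal. apply poly_in_bern_prod_to_unit; auto.
  - intros x Hx.
    replace (A x - hh x) with (lsum (grid Nv n) (fun q => (A x + (-1) * vv q) * w q x))
      by (unfold hh, w; rewrite bern_prod_average_affine; ring).
    apply Havg; [intros k [Hk _]; apply HB1'; auto| |].
    + intros q. destruct (Hvv q) as [Hb _]. specialize (HMA x Hx).
      apply Rabs_le_inv in HMA. apply Rabs_le_inv in Hb. unfold Bd; lra.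
    + intros q Hd. destruct (Hvv q) as [_ [Hq _]]. specialize (Hq x (conj Hx Hd)). lra.
  - intros x Hx.
    replace (G x + hh x) with (lsum (grid Nv n) (fun q => (G x + 1 * vv q) * w q x))
      by (unfold hh, w; rewrite bern_prod_average_affine; ring).
    apply Havg; [intros k [_ Hk]; apply HB2; auto| |].
    + intros q. destruct (Hvv q) as [Hb _]. specialize (HMG x Hx).
      apply Rabs_le_inv in HMG. apply Rabs_le_inv in Hb. unfold Bd; lra.
    + intros q Hd. destruct (Hvv q) as [_ [_ Hq]]. specialize (Hq x (conj Hx Hd)). lra.
Qed.

(** * Representation on a single block *)

Definition unit_cube (J : nat -> Prop) (y : point) : Prop := forall j, J j -> 0 <= y j <= 1.

Lemma unit_cube_compact (J : nat -> Prop) : compact_in J (unit_cube J).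
Proof.
  split.
  - exists 1. intros y Hy i Hi. specialize (Hy i Hi). apply Rabs_le; lra.
  - intros u y Hu Hcv j Hj. apply (Un_cv_bounds (fun k => u k j)); auto. intros k; apply Hu; auto.
Qed.

Lemma penalty_positive n (J : nat -> Prop) (A Pen : fn) :
  (forall j, J j -> (j < n)%nat) -> poly_in J A -> poly_in J Pen ->
  (forall y, unit_cube J y -> 0 <= Pen y) -> (forall y, unit_cube J y -> Pen y <= 0 -> A y > 0) ->
  exists k : nat, forall y, unit_cube J y -> A y + (INR k + 1) * Pen y >= / (INR k + 1).
Proof.
  intros HJ HA HPen HPen0 HAPen. apply NNPP. intros H.
  assert (Hk : forall k : nat, exists y, unit_cube J y /\ A y + (INR k + 1) * Pen y < / (INR k + 1)).
  { intros k. apply not_all_not_ex. intros H'. apply H. exists k. intros y Hy.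
    apply Rnot_lt_ge. intros H2. apply (H' y); auto. }
  destruct (choice _ Hk) as [ys Hys].
  destruct (compact_in_subseq n J (unit_cube J) ys HJ (unit_cube_compact J)) as [phi [ystar [Hphi [Hcv Hcube]]]].
  { intros k; apply Hys. }
  destruct (poly_in_bounded_on J (unit_cube J) A 1 HA) as [MA [_ HMA]].
  { intros y Hy i Hi. specialize (Hy i Hi). apply Rabs_le; lra. }
  assert (HAb : forall k, - MA <= A (ys k)).
  { intros k. destruct (Hys k) as [Hc _]. apply (Rabs_le_inv _ _ (HMA _ Hc)). }
  assert (HPenb : forall k, Pen (ys k) <= (1 + MA) / (INR k + 1)).
  { intros k. destruct (Hys k) as [_ Hl]. specialize (HAb k). pose proof (pos_INR k).
    assert (/ (INR k + 1) <= 1)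
      by (rewrite <- Rinv_1; apply Rinv_le_contravar; lra).
    apply Rmult_le_reg_l with (INR k + 1); [lra|]. unfold Rdiv.
    rewrite <- Rmult_assoc, (Rmult_comm _ (1 + MA)), Rmult_assoc, Rinv_r by lra. lra. }
  assert (HPen_lim : Pen ystar <= 0).
  { apply Rle_cv_lim with (Un := fun k => Pen (ys (phi k))) (Vn := fun k => (1 + MA) / (INR (phi k) + 1)).
    - intros k; apply HPenb.
    - apply (poly_in_continuous J Pen HPen); auto.
    - apply (Un_cv_subseq (fun k => (1 + MA) / (INR k + 1))); auto. apply Un_cv_div_succ. }
  assert (HA_lim : A ystar <= 0).
  { apply Rle_cv_lim with (Un := fun k => A (ys (phi k))) (Vn := fun k => 1 / (INR (phi k) + 1)).
    - intros k. destruct (Hys (phi k)) as [Hc Hl]. pose proof (HPen0 _ Hc).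
      pose proof (pos_INR (phi k)). unfold Rdiv. rewrite Rmult_1_l. nra.
    - apply (poly_in_continuous J A HA); auto.
    - apply (Un_cv_subseq (fun k => 1 / (INR k + 1))); auto. apply Un_cv_div_succ. }
  specialize (HAPen ystar Hcube HPen_lim). lra.
Qed.

Lemma coordinates_in_generators (g : nat -> fn) (I J : nat -> Prop) :
  (forall P, poly_in I P -> alg_gen (fun q => exists j, J j /\ q = g j) P) ->
  exists sigma : nat -> fn, forall i, I i ->
    poly_in J (sigma i) /\ forall x, x i = sigma i (fun j => g j x).
Proof.
  intros Hgen. apply (choice (fun i P => I i -> poly_in J P /\ forall x, x i = P (fun j => g j x))).
  intros i. destruct (excluded_middle_informative (I i)) as [Hi|Hi].
  - destruct (alg_gen_poly_of_generators g J (fun x => x i) (Hgen _ (pi_var I i Hi))) as [P [H1 H2]].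
    exists P; auto.
  - exists (fun _ => 0); tauto.
Qed.

Lemma lin_comb_cube_prod m g Cl x :
  lin_comb m g Cl x = lsum Cl (fun t => let '(a, b, c) := t in c * cube_prod m a b (fun k => g k x)).
Proof.
  assert (Hh : forall a b, h m g a b x = cube_prod m a b (fun k => g k x)).
  { intros a b. unfold h, cube_prod. induction m; simpl; auto. rewrite IHm; auto. }
  unfold lin_comb. induction Cl as [|[[a b] c] Cl IH]; simpl; auto. rewrite IH, Hh; auto.
Qed.

Section Generators.
Variables (m : nat) (g : nat -> fn) (I J : nat -> Prop) (sigma : nat -> fn).
Hypothesis HJ : forall j, J j -> (j < m)%nat.
Hypothesis HgI : forall j, J j -> poly_in I (g j).
Hypothesis Hsig : forall i, I i -> poly_in J (sigma i) /\ forall x, x i = sigma i (fun j => g j x).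

Definition lift (y : point) : point := fun i => sigma i y.

Definition gen_penalty (y : point) : R := sum_upto (fun j => ind_on J j * (y j - g j (lift y)) ^ 2) m.

Lemma lift_generators x i : I i -> lift (fun j => g j x) i = x i.
Proof. intros Hi. unfold lift. symmetry; apply Hsig; auto. Qed.

Lemma poly_in_comp_lift P : poly_in I P -> poly_in J (fun y => P (lift y)).
Proof. intros HP. apply (poly_in_subst I J P sigma); auto. intros i Hi; apply Hsig; auto. Qed.

Lemma poly_in_gen_penalty : poly_in J gen_penalty.
Proof.
  apply poly_in_sum_upto. intros j _. unfold ind_on.
  destruct (excluded_middle_informative (J j)) as [Hj|Hj].
  - apply poly_in_scal, poly_in_pow, poly_in_sub; [apply pi_var; auto|apply poly_in_comp_lift, HgI; auto].
  - apply poly_in_ext with (fun _ => 0); [apply pi_const|intros; ring].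
Qed.

Lemma gen_penalty_nonneg y : 0 <= gen_penalty y.
Proof. apply sum_upto_nonneg; intros; apply Rmult_le_pos; [apply ind_on_nonneg|apply pow2_ge_0]. Qed.

Lemma gen_penalty_generators x : gen_penalty (fun j => g j x) = 0.
Proof.
  unfold gen_penalty. rewrite (sum_upto_ext _ (fun _ => 0)); [rewrite sum_upto_const; ring|].
  intros j _. unfold ind_on. destruct (excluded_middle_informative (J j)) as [Hj|Hj]; [|ring].
  rewrite (poly_in_congr I (g j) (HgI j Hj) _ x (lift_generators x)), Rminus_diag. ring.
Qed.

Lemma gen_penalty_zero y : gen_penalty y <= 0 -> forall j, J j -> g j (lift y) = y j.
Proof.
  intros HPy j Hj.
  pose proof (sum_upto_nonneg_eq0 (fun j => ind_on J j * (y j - g j (lift y)) ^ 2) m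
    (fun k _ => Rmult_le_pos _ _ (ind_on_nonneg J k) (pow2_ge_0 _)) HPy j (HJ j Hj)) as E.
  unfold ind_on in E. destruct (excluded_middle_informative (J j)); [|tauto].
  rewrite Rmult_1_l in E.
  assert (E0 : y j - g j (lift y) = 0) by (apply NNPP; intros Hne; exact (pow_nonzero _ 2 Hne E)).
  lra.
Qed.

End Generators.

Lemma block_representation m (g : nat -> fn) (I J : nat -> Prop) (F : fn) :
  (forall j, J j -> (j < m)%nat) -> (forall j, J j -> poly_in I (g j)) ->
  (forall P, poly_in I P -> alg_gen (fun q => exists j, J j /\ q = g j) P) -> poly_in I F ->
  (forall x, (forall j, J j -> 0 <= g j x <= 1) -> F x > 0) ->
  exists Cl : list ((nat -> nat) * (nat -> nat) * R),
    NoDup (map (fun t => let '(a, b, _) := t in (a, b)) Cl) /\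
    (forall a b c, In (a, b, c) Cl -> c > 0 /\ (forall j, (a j <> 0)%nat \/ (b j <> 0)%nat -> J j)) /\
    (forall x, F x = lin_comb m g Cl x).
Proof.
  intros HJ HgI Hgen HF Hpos.
  destruct (coordinates_in_generators g I J Hgen) as [sigma Hsig].
  set (A := fun y => F (lift sigma y)).
  set (Pen := gen_penalty m g J sigma).
  assert (HA : poly_in J A) by (apply (poly_in_comp_lift g I J sigma Hsig F HF)).
  assert (HPen : poly_in J Pen) by (apply (poly_in_gen_penalty m g I J sigma HgI Hsig)).
  destruct (penalty_positive m J A Pen HJ HA HPen) as [k0 Hk0].
  { intros y _. apply gen_penalty_nonneg. }
  { intros y Hy HPy. apply Hpos. intros j Hj.
    rewrite (gen_penalty_zero m g J sigma HJ y HPy j Hj). apply Hy; auto. }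
  set (Q := fun y => A y + (INR k0 + 1) * Pen y).
  assert (HQ : poly_in J Q) by (apply pi_add; [auto|apply poly_in_scal; auto]).
  destruct (cube_prod_representation m J Q (/ (INR k0 + 1)) HJ HQ) as [Cl [H1 [H2 H3]]]; auto.
  { apply Rinv_0_lt_compat; pose proof (pos_INR k0); lra. }
  exists Cl. split; [auto|split; [auto|]]. intros x.
  rewrite lin_comb_cube_prod, <- H3. unfold Q, A, Pen.
  rewrite (gen_penalty_generators m g I J sigma HgI Hsig x),
    (poly_in_congr I F HF (lift sigma (fun j => g j x)) x); [ring|].
  intros i Hi. apply (lift_generators g I J sigma Hsig x i Hi).
Qed.

(** * Running intersection *)

Section Blocks.
Variables (n p : nat) (g : nat -> fn) (I J : nat -> nat -> Prop).
Hypothesis HIsub : forall l i, (l < p)%nat -> I l i -> (i < n)%nat.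
Hypothesis HgI : forall l j, (l < p)%nat -> J l j -> poly_in (I l) (g j).
Hypothesis HRIP : forall l, (l + 1 < p)%nat -> exists s, (s <= l)%nat /\
      forall i, I (l + 1)%nat i -> (exists r, (r <= l)%nat /\ I r i) -> I s i.
Hypothesis Hcomp : forall l, (l < p)%nat ->
      compact_in (I l) (fun z => forall j, J l j -> 0 <= g j z <= 1).

Definition K_block (l : nat) (x : point) : Prop := forall j, J l j -> 0 <= g j x <= 1.
Definition K_upto (L : nat) (x : point) : Prop := forall r, (r <= L)%nat -> K_block r x.
Definition I_upto (L : nat) (i : nat) : Prop := exists r, (r <= L)%nat /\ I r i.

Lemma K_upto_compact L : (L < p)%nat -> compact_in (I_upto L) (K_upto L).
Proof.
  intros HL. split.
  - induction L.
    + destruct (Hcomp 0%nat HL) as [[M HM] _]. exists M.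
      intros x Hx i [r [Hr Hi]]. replace r with 0%nat in * by lia. apply (HM x); auto. apply Hx; lia.
    + destruct IHL as [M1 H1]; [lia|]. destruct (Hcomp (S L) HL) as [[M2 HM2] _].
      exists (Rmax M1 M2). intros x Hx i [r [Hr Hi]]. destruct (Nat.eq_dec r (S L)).
      * subst r. specialize (HM2 x (Hx (S L) (le_n _)) i Hi). pose proof (Rmax_r M1 M2); lra.
      * assert (Rabs (x i) <= M1); [|pose proof (Rmax_l M1 M2); lra].
        apply H1; [intros r' Hr'; apply Hx; lia|exists r; split; [lia|auto]].
  - intros u x Hu Hcv r Hr j Hj. destruct (Hcomp r ltac:(lia)) as [_ Hcl]. apply (Hcl u x); auto.
    + intros k; apply Hu; auto.
    + intros i Hi; apply Hcv. exists r; auto.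
Qed.

(* Since the [g_j] of each block only depend on the variables of that block, two points of
   [K_upto L] and [K_block (S L)] agreeing on the common variables glue to a point of
   [K_upto (S L)]. *)
Lemma glue_points L x x' : (S L < p)%nat -> K_upto L x -> K_block (S L) x' ->
  (forall i, I_upto L i -> I (S L) i -> x i = x' i) ->
  exists z, K_upto (S L) z /\ (forall i, I_upto L i -> z i = x i) /\ (forall i, I (S L) i -> z i = x' i).
Proof.
  intros HL Hx Hx' Hag.
  exists (fun i => if excluded_middle_informative (I (S L) i) then x' i else x i).
  assert (ZU : forall i, I_upto L i -> (if excluded_middle_informative (I (S L) i) then x' i else x i) = x i).
  { intros i Hi. destruct (excluded_middle_informative (I (S L) i)); auto. symmetry; apply Hag; auto. }
  assert (ZV : forall i, I (S L) i -> (if excluded_middle_informative (I (S L) i) then x' i else x i) = x' i).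
  { intros i Hi. destruct (excluded_middle_informative (I (S L) i)); tauto. }
  split; [|split; auto].
  intros r Hr j Hj. destruct (Nat.eq_dec r (S L)).
  - subst r. rewrite (poly_in_congr (I (S L)) (g j) (HgI (S L) j HL Hj) _ x'); auto.
  - rewrite (poly_in_congr (I r) (g j) (HgI r j ltac:(lia) Hj) _ x).
    + apply (Hx r); auto; lia.
    + intros i Hi; apply ZU. exists r; split; [lia|auto].
Qed.

Lemma split_last_block L (F : nat -> fn) : (S L < p)%nat ->
  (forall r, (r <= S L)%nat -> poly_in (I r) (F r)) ->
  (forall x, K_upto (S L) x -> sum_upto (fun r => F r x) (S (S L)) > 0) ->
  exists hh, poly_in (fun i => I_upto L i /\ I (S L) i) hh /\
    (forall x, K_upto L x -> sum_upto (fun r => F r x) (S L) - hh x > 0) /\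
    (forall x, K_block (S L) x -> F (S L) x + hh x > 0).
Proof.
  intros HL HF Hpos.
  assert (HA : poly_in (I_upto L) (fun x => sum_upto (fun r => F r x) (S L))).
  { apply poly_in_sum_upto. intros k Hk. apply (poly_in_mono (I k)).
    - intros i Hi; exists k; split; [lia|auto].
    - apply HF; lia. }
  assert (HG : poly_in (I (S L)) (F (S L))) by (apply HF; lia).
  apply (poly_split n (I_upto L) (I (S L)) (K_upto L) (K_block (S L)) _ _ ltac:(intros i [r [Hr Hi]]; apply (HIsub r); auto; lia)
           ltac:(intros i Hi; apply (HIsub (S L)); auto) HA HG (K_upto_compact L ltac:(lia)) (Hcomp (S L) HL)).
  intros x x' Hx Hx' Hag. destruct (glue_points L x x' HL Hx Hx' Hag) as [z [Hz [ZU ZV]]].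
  specialize (Hpos z Hz). rewrite sum_upto_S in Hpos.
  rewrite (poly_in_congr _ _ HG z x') in Hpos by auto.
  rewrite <- (poly_in_congr _ _ HA z x) by auto. exact Hpos.
Qed.

(* The correction [hh] of [split_last_block] only involves variables of some earlier block [s]
   (running intersection), so it can be moved from the last block to block [s]. *)
Lemma blockwise_positive_decomposition L : (L < p)%nat ->
  forall F : nat -> fn, (forall r, (r <= L)%nat -> poly_in (I r) (F r)) ->
  (forall x, K_upto L x -> sum_upto (fun r => F r x) (S L) > 0) ->
  exists F', (forall r, (r <= L)%nat -> poly_in (I r) (F' r)) /\
    (forall x, sum_upto (fun r => F' r x) (S L) = sum_upto (fun r => F r x) (S L)) /\
    (forall r, (r <= L)%nat -> forall x, K_block r x -> F' r x > 0).
Proof.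
  induction L; intros HL F HF Hpos.
  - exists F. split; [auto|split; [auto|]]. intros r Hr x Hx. assert (r = 0%nat) by lia; subst r.
    assert (K_upto 0 x) by (intros r' Hr'; replace r' with 0%nat by lia; auto).
    specialize (Hpos x H). simpl in Hpos. lra.
  - destruct (HRIP L ltac:(lia)) as [s [Hs HsI]]. replace (L + 1)%nat with (S L) in HsI by lia.
    destruct (split_last_block L F HL HF Hpos) as [hh [Hh1 [Hh2 Hh3]]].
    set (F2 := fun r => if Nat.eq_dec r s then (fun x => F s x - hh x) else F r).
    assert (HF2 : forall x, sum_upto (fun r => F2 r x) (S L) = sum_upto (fun r => F r x) (S L) - hh x).
    { intros x. unfold F2.
      rewrite (sum_upto_ext _ (fun r => if Nat.eq_dec r s then F r x - hh x else F r x)).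
      - apply sum_upto_sub_at; lia.
      - intros k _. destruct (Nat.eq_dec k s); [subst; auto|auto]. }
    destruct (IHL ltac:(lia) F2) as [F' [H1 [H2 H3]]].
    + intros r Hr. unfold F2. destruct (Nat.eq_dec r s).
      * subst r. apply poly_in_sub; [apply HF; lia|].
        apply (poly_in_mono (fun i => I_upto L i /\ I (S L) i)); auto. intros i [Hu Hv]. apply HsI; auto.
      * apply HF; lia.
    + intros x Hx. rewrite HF2. apply Hh2; auto.
    + exists (fun r => if Nat.eq_dec r (S L) then (fun x => F (S L) x + hh x) else F' r).
      split; [|split].
      * intros r Hr. destruct (Nat.eq_dec r (S L)).
        -- subst r. apply pi_add; [apply HF; lia|].
           apply (poly_in_mono (fun i => I_upto L i /\ I (S L) i)); auto. intros i [_ Hv]; auto.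
        -- apply H1; lia.
      * intros x. rewrite (sum_upto_S (fun r => F r x)), sum_upto_S.
        destruct (Nat.eq_dec (S L) (S L)); [|lia].
        rewrite (sum_upto_ext _ (fun r => F' r x)), H2, HF2; [ring|].
        intros k Hk. destruct (Nat.eq_dec k (S L)); [lia|auto].
      * intros r Hr x Hx. destruct (Nat.eq_dec r (S L)); [subst r; apply Hh3; auto|].
        apply H3; auto; lia.
Qed.

End Blocks.

Theorem mainTheorem1
  (n m p : nat) (f : fn) (g : nat -> fn)
  (I J : nat -> nat -> Prop)
  (* f, g_j in R[x] *)
  (Hf : poly_in (fun i => (i < n)%nat) f)
  (Hg : forall j, (j < m)%nat -> poly_in (fun i => (i < n)%nat) (g j))
  (* Sparsity Assumption *)
  (Hp : (1 <= p)%nat)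
  (HIsub : forall l i, (l < p)%nat -> I l i -> (i < n)%nat)
  (HJsub : forall l j, (l < p)%nat -> J l j -> (j < m)%nat)
  (Hfdec : exists F : nat -> fn,
      (forall l, (l < p)%nat -> poly_in (I l) (F l)) /\
      forall x, f x = sum_upto (fun l => F l x) p)
  (HgI : forall l j, (l < p)%nat -> J l j -> poly_in (I l) (g j))
  (HIcov : forall i, (i < n)%nat -> exists l, (l < p)%nat /\ I l i)
  (HJcov : forall j, (j < m)%nat -> exists l, (l < p)%nat /\ J l j)
  (HRIP : forall l, (l + 1 < p)%nat -> exists s, (s <= l)%nat /\
      forall i, I (l + 1)%nat i -> (exists r, (r <= l)%nat /\ I r i) -> I s i)
  (* Compactness/Generation Assumption (a) *)
  (Hcomp : forall l, (l < p)%nat ->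
      compact_in (I l) (fun z => forall j, J l j -> 0 <= g j z <= 1))
  (Hgen : forall l, (l < p)%nat -> forall P : fn,
      poly_in (I l) P <-> alg_gen (fun q => exists j, J l j /\ q = g j) P)
  (* positivity on K *)
  (Hpos : forall x : point, (forall j, (j < m)%nat -> 0 <= g j x <= 1) -> f x > 0) :
  exists (F : nat -> fn)
         (C : nat -> list ((nat -> nat) * (nat -> nat) * R)),
    (forall l, (l < p)%nat -> poly_in (I l) (F l)) /\
    (forall x, f x = sum_upto (fun l => F l x) p) /\
    (forall l, (l < p)%nat ->
       NoDup (map (fun t => let '(a, b, _) := t in (a, b)) (C l)) /\
       (forall a b c, In (a, b, c) (C l) ->
          c > 0 /\ (forall j, (a j <> 0)%nat \/ (b j <> 0)%nat -> J l j)) /\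
       (forall x, F l x = lin_comb m g (C l) x)).
Proof.
  destruct Hfdec as [F0 [HF0 Hf0]].
  replace p with (S (p - 1)) in * by lia.
  destruct (blockwise_positive_decomposition n (S (p - 1)) g I J HIsub HgI HRIP Hcomp (p - 1)
              ltac:(lia) F0) as [F [HF [HFsum HFpos]]].
  { intros r Hr; apply HF0; lia. }
  { intros x Hx. rewrite <- Hf0. apply Hpos. intros j Hj.
    destruct (HJcov j Hj) as [l [Hl Hjl]]. apply (Hx l); auto; lia. }
  assert (HC : forall l, exists Cl, (l < S (p - 1))%nat ->
      NoDup (map (fun t => let '(a, b, _) := t in (a, b)) Cl) /\
      (forall a b c, In (a, b, c) Cl -> c > 0 /\ (forall j, (a j <> 0)%nat \/ (b j <> 0)%nat -> J l j)) /\
      (forall x, F l x = lin_comb m g Cl x)).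
  { intros l. destruct (Nat.lt_ge_cases l (S (p - 1))) as [Hl|Hl]; [|exists nil; lia].
    destruct (block_representation m g (I l) (J l) (F l)) as [Cl HCl].
    - intros j Hj; apply (HJsub l); auto.
    - intros j Hj; apply (HgI l); auto.
    - intros P HP; apply (Hgen l Hl); auto.
    - apply HF; lia.
    - intros x Hx; apply (HFpos l); [lia|exact Hx].
    - exists Cl; auto. }
  destruct (choice _ HC) as [C HCl].
  exists F, C. split; [|split].
  - intros l Hl; apply HF; lia.
  - intros x. rewrite Hf0, HFsum; auto.
  - intros l Hl. apply HCl; auto.
Qed.
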